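(* (a) The set $D(h)$ is uncountable, perfect, nowhere dense, has Lebesgue measure zero, and is a self-similar fractal whose Hausdorff dimension $\alpha_0$ is the solution of $$\sum_{p\in\{1,2,\ldots,q-1\},\,p\ne u}\left(\frac1q\right)^{p\alpha_0}=1.$$ (b) The set $E(h)=\{\Delta^{-q}_{\alpha_1\alpha_2\ldots}:\alpha_n\in\Theta\}$ is a self-similar fractal with Hausdorff dimension $\log_q|\Theta|$. (c) Consequently $h$ does not preserve Hausdorff dimension: $\dim_H D(h)\ne\dim_H E(h)$.
   Context: Let $q>3$ be an integer, fix $u\in\{0,1,\ldots,q-1\}$, and put $\Theta=\{1,2,\ldots,q-1\}\setminus\{u\}$. The nega-$q$-ary representation is $\Delta^{-q}_{\beta_1\beta_2\ldots}=\sum_{k\ge1}\frac{\beta_k}{(-q)^k}$, $\beta_k\in\{0,\ldots,q-1\}$. For a sequence $(\alpha_n)_{n\ge1}$ with $\alpha_n\in\Theta$, let $x((\alpha_n))$ be the number whose nega-$q$-ary digit string is the concatenation of the blocks $\underbrace{u\ldots u}_{\alpha_n-1}\alpha_n$ ($\alpha_n-1$ copies of $u$ followed by the digit $\alpha_n$), $n=1,2,\ldots$; equivalently $x=-\frac{u}{q+1}+\sum_{n\ge1}\frac{\alpha_n-u}{(-q)^{\alpha_1+\cdots+\alpha_n}}$. Let $D(h)$ be the set of all such $x$, and define $h:D(h)\to\mathbb R$ by $h(x)=\Delta^{-q}_{\alpha_1\alpha_2\ldots}=\sum_{n\ge1}\frac{\alpha_n}{(-q)^n}$. $E(h)$ denotes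 the range of $h$ and $|\Theta|$ the number of elements of $\Theta$. *)

From Stdlib Require Import Reals Lra Lia Arith List.
Open Scope R_scope.

(* Nega-q-ary value: digits beta 1, beta 2, ... (beta 0 is ignored).
   nega q beta x  <->  x = sum_{k>=1} beta_k / (-q)^k. *)
Definition nega (q : nat) (beta : nat -> nat) (x : R) : Prop :=
  infinite_sum (fun k => INR (beta (S k)) / (- INR q) ^ (S k)) x.

Definition in_Theta (q u p : nat) : Prop := (1 <= p <= q - 1)%nat /\ p <> u.
Definition Theta_seq (q u : nat) (alpha : nat -> nat) : Prop :=
  forall n, (1 <= n)%nat -> in_Theta q u (alpha n).

Definition card_Theta (q u : nat) : nat :=
  length (filter (fun p => negb (Nat.eqb p u)) (seq 1 (q - 1))).

Fixpoint blk_end (alpha : nat -> nat) (n : nat) : nat :=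
  match n with
  | O => O
  | S m => (blk_end alpha m + alpha (S m))%nat
  end.

(* beta is the concatenation of the blocks u...u alpha_n (alpha_n - 1 copies of u) *)
Definition is_concat (u : nat) (alpha beta : nat -> nat) : Prop :=
  forall k, (1 <= k)%nat ->
    (forall n, (1 <= n)%nat -> k = blk_end alpha n -> beta k = alpha n) /\
    ((forall n, (1 <= n)%nat -> k <> blk_end alpha n) -> beta k = u).

Definition Dh (q u : nat) (x : R) : Prop :=
  exists alpha beta, Theta_seq q u alpha /\ is_concat u alpha beta /\ nega q beta x.

(* E(h) = range of h *)
Definition Eh (q u : nat) (y : R) : Prop :=
  exists alpha, Theta_seq q u alpha /\ nega q alpha y.

Definition uncountable (A : R -> Prop) : Prop :=
  ~ exists f : nat -> R, forall x, A x -> exists n, f n = x.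

Definition closed_set (A : R -> Prop) : Prop :=
  forall x, (forall eps, 0 < eps -> exists y, A y /\ Rabs (y - x) < eps) -> A x.

Definition perfect (A : R -> Prop) : Prop :=
  closed_set A /\
  forall x, A x -> forall eps, 0 < eps -> exists y, A y /\ y <> x /\ Rabs (y - x) < eps.

(* interior of the closure is empty: every nonempty open interval contains a
   nonempty open interval that avoids the closure of A *)
Definition nowhere_dense (A : R -> Prop) : Prop :=
  forall a b, a < b -> exists c d, a <= c /\ c < d /\ d <= b /\
    forall x, c < x < d -> exists eps, 0 < eps /\ forall y, A y -> eps <= Rabs (y - x).

Definition leb_null (A : R -> Prop) : Prop :=
  forall eps, 0 < eps -> exists a b : nat -> R,
    (forall n, a n <= b n) /\
    (forall x, A x -> exists n, a n <= x <= b n) /\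
    (forall N, sum_f_R0 (fun n => b n - a n) N < eps).

(* l^s for l >= 0, s > 0, with 0^s = 0 *)
Definition pw (l s : R) : R := if Rle_dec l 0 then 0 else Rpower l s.

(* s-dimensional Hausdorff measure is zero (covers of subsets of R by closed
   intervals; every set of diameter d lies in a closed interval of length d) *)
Definition H_null (s : R) (A : R -> Prop) : Prop :=
  forall eps, 0 < eps -> exists a b : nat -> R,
    (forall n, a n <= b n) /\
    (forall x, A x -> exists n, a n <= x <= b n) /\
    (forall N, sum_f_R0 (fun n => pw (b n - a n) s) N < eps).

Definition H_infinite (s : R) (A : R -> Prop) : Prop :=
  forall M, exists delta, 0 < delta /\ forall a b : nat -> R,
    (forall n, a n <= b n <= a n + delta) ->
    (forall x, A x -> exists n, a n <= x <= b n) ->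
    exists N, M <= sum_f_R0 (fun n => pw (b n - a n) s) N.

Definition hausdorff_dim (A : R -> Prop) (d : R) : Prop :=
  0 <= d /\
  (forall s, d < s -> H_null s A) /\
  (forall s, 0 < s < d -> H_infinite s A).

Definition self_similar (A : R -> Prop) : Prop :=
  (exists x, A x) /\ closed_set A /\ (exists M, forall x, A x -> Rabs x <= M) /\
  exists rs : list (R * R), rs <> nil /\
    (forall p, In p rs -> 0 < Rabs (fst p) < 1) /\
    (forall x, A x <-> exists p y, In p rs /\ A y /\ x = fst p * y + snd p).

Definition dim_eq (q u : nat) (a : R) : Prop :=
  sum_f 1 (q - 1) (fun p => if Nat.eqb p u then 0 else Rpower (1 / INR q) (INR p * a)) = 1.

From Pilot Require Import Defs.
From Stdlib Require Import Reals Lra Lia ZArith List.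
From Stdlib Require Import Classical ClassicalEpsilon FunctionalExtensionality PropExtensionality.
Open Scope R_scope.
Import ListNotations.

(* Both D(h) and E(h) are attractors of the same shape: the set of limits of
   c0 + sum_n (-1/q)^(l a_1 + ... + l a_n) g a_n over all words a_1 a_2 ... over
   a finite alphabet A, where every letter a has a "length" l a >= 1 and an
   integer "digit" g a, with distinct letters having digits incongruent mod q.
   For D(h) the letter p in Theta has length p and digit p - u; for E(h) it has
   length 1 and digit p.  For such an attractor with similarity dimension d
   (i.e. sum_a q^(-d l a) = 1):
   - covering by the q^(-wlen w)-cylinders of all words of n letters gives
     H^s = 0 for s > d;
   - the mass distribution mu w = q^(-d wlen w) on cylinders, together with the
     fact that cylinders of equal depth have incongruent integer codes and
     hence are q^(-depth)-separated, gives H^s = +oo for s < d (after a König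
     argument reducing an arbitrary cover to finitely many cylinder depths).
   Hence dim_H D(h) = a0 < 1 and dim_H E(h) = log_q |Theta|; since some letter
   of Theta has length >= 2, a0 < log_q |Theta|.  The topological properties
   of D(h) follow: positive dimension gives uncountability and perfectness,
   dimension < 1 gives Lebesgue measure zero, and a closed null set is
   nowhere dense. *)

Lemma Un_cv_dist_le (u : nat -> R) (L c e : R) (j : nat) :
  Un_cv u L -> (forall n, (j <= n)%nat -> Rabs (u n - c) <= e) -> Rabs (L - c) <= e.
Proof.
  intros Hu Hb. destruct (Rle_dec (Rabs (L - c)) e) as [h|h]; auto.
  exfalso. assert (Hp : Rabs (L - c) - e > 0) by lra.
  destruct (Hu _ Hp) as [N HN].
  specialize (HN (max N j) (Nat.le_max_l _ _)). specialize (Hb (max N j) (Nat.le_max_r _ _)).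
  unfold R_dist in HN.
  assert (Rabs (L - c) <= Rabs (u (max N j) - L) + Rabs (u (max N j) - c)).
  { replace (L - c) with (-(u (max N j) - L) + (u (max N j) - c)) by ring.
    eapply Rle_trans; [apply Rabs_triang|]. rewrite Rabs_Ropp. lra. }
  lra.
Qed.

Lemma Un_cv_shift_iff (u : nat -> R) L : Un_cv u L <-> Un_cv (fun n => u (S n)) L.
Proof.
  split; intros H e He; destruct (H e He) as [N HN].
  - exists N. intros n Hn. apply HN. lia.
  - exists (S N). intros n Hn. destruct n; [lia|]. apply HN. lia.
Qed.

Lemma geometric_eventually_lt (x K e : R) :
  0 <= x < 1 -> 0 < e -> exists N, forall n, (N <= n)%nat -> K * x ^ n < e.
Proof.
  intros Hx He.
  destruct (Rle_dec K 0) as [hK|hK].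
  - exists 0%nat. intros n _. assert (0 <= x ^ n) by (apply pow_le; lra). nra.
  - assert (Rabs x < 1) by (rewrite Rabs_pos_eq; lra).
    destruct (pow_lt_1_zero x H (e / K)) as [N HN].
    { apply Rdiv_lt_0_compat; lra. }
    exists N. intros n Hn. specialize (HN n Hn).
    rewrite Rabs_pos_eq in HN by (apply pow_le; lra).
    apply (Rmult_lt_compat_l K) in HN; [|lra].
    replace (K * (e / K)) with e in HN by (field; lra). lra.
Qed.

Lemma eq0_of_geometric_bound (z K x : R) :
  0 <= x < 1 -> (forall n, Rabs z <= K * x ^ n) -> z = 0.
Proof.
  intros Hx H. destruct (Req_dec z 0) as [h|h]; auto.
  assert (Hz : 0 < Rabs z) by (apply Rabs_pos_lt; auto).
  destruct (geometric_eventually_lt x K (Rabs z) Hx Hz) as [N HN].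
  specialize (HN N (le_n _)). specialize (H N). lra.
Qed.

Lemma exp_le_mono x y : x <= y -> exp x <= exp y.
Proof. intros [h|h]; [left; apply exp_increasing; auto| right; subst; auto]. Qed.

Lemma ln_le_mono x y : 0 < x -> x <= y -> ln x <= ln y.
Proof. intros Hx [h|h]; [left; apply ln_increasing; auto| right; subst; auto]. Qed.

Lemma Rabs_le_inv a b : Rabs a <= b -> - b <= a <= b.
Proof. intros H. pose proof (Rle_abs a). pose proof (Rle_abs (- a)). rewrite Rabs_Ropp in H1. lra. Qed.

Lemma pow_le_one x n : 0 <= x <= 1 -> x ^ n <= 1.
Proof. intros H. induction n; simpl; [lra|]. pose proof (pow_le x n). nra. Qed.

Lemma INR_unbounded_le (x : R) : exists K : nat, x <= INR K.
Proof.
  destruct (archimed x) as [h1 h2]. exists (Z.to_nat (up x)).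
  destruct (Z_lt_le_dec (up x) 0) as [h|h].
  - replace (Z.to_nat (up x)) with 0%nat by lia. simpl. apply IZR_lt in h. lra.
  - rewrite INR_IZR_INZ, Z2Nat.id by lia. lra.
Qed.

Lemma list_bounded_by_nat (lr : list R) : exists N : nat, forall x, In x lr -> x <= INR N.
Proof.
  induction lr as [|a lr [N HN]]; [exists 0%nat; intros x []|].
  destruct (INR_unbounded_le a) as [M HM]. exists (max N M). intros x [<-|hx].
  - eapply Rle_trans; [exact HM| apply le_INR; lia].
  - eapply Rle_trans; [apply HN; auto| apply le_INR; lia].
Qed.

Lemma in_firstn {T} (x : T) n (v : list T) : In x (firstn n v) -> In x v.
Proof. intros H. rewrite <- (firstn_skipn n v). apply in_or_app. auto. Qed.

Lemma exists_In_of_neq_nil {T} (L : list T) : L <> nil -> exists a, In a L.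
Proof. destruct L as [|a L]; [congruence|]. exists a. left. reflexivity. Qed.

Lemma NoDup_map_in {T U} (f : T -> U) l :
  (forall x y, In x l -> In y l -> f x = f y -> x = y) -> NoDup l -> NoDup (map f l).
Proof.
  induction l; simpl; intros Hi Hn; constructor.
  - intros Hin. apply in_map_iff in Hin as [y [Hy Hyl]].
    inversion Hn; subst. assert (y = a) by (apply Hi; auto). subst; contradiction.
  - inversion Hn; subst. apply IHl; auto.
Qed.

Lemma Z_ball_NoDup_length (L : list Z) (z1 : Z) (K : nat) : NoDup L ->
  (forall z, In z L -> (Z.abs (z - z1) <= Z.of_nat K)%Z) -> (length L <= 2 * K + 1)%nat.
Proof.
  intros Hn Hb.
  set (f := fun z => Z.to_nat (z - z1 + Z.of_nat K)).
  assert (Hnd : NoDup (map f L)).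
  { apply NoDup_map_in; auto. intros x y hx hy e. unfold f in e.
    pose proof (Hb x hx). pose proof (Hb y hy). apply Z2Nat.inj in e; lia. }
  assert (Hi : incl (map f L) (seq 0 (2 * K + 1))).
  { intros n hn. apply in_map_iff in hn as [z [<- hz]]. apply in_seq. unfold f.
    pose proof (Hb z hz). lia. }
  pose proof (NoDup_incl_length Hnd Hi). rewrite length_map, length_seq in H. lia.
Qed.

Lemma list_common_eps {T} (Qp : T -> R -> Prop) :
  (forall a e e', 0 < e' <= e -> Qp a e -> Qp a e') ->
  forall L, (forall a, In a L -> exists e, 0 < e /\ Qp a e) ->
  exists e, 0 < e /\ forall a, In a L -> Qp a e.
Proof.
  intros Hm L. induction L as [|b L IH]; intros H.
  - exists 1. split; [lra|]. intros a [].
  - destruct IH as [e1 [He1 H1]]; [intros a ha; apply H; right; auto|].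
    destruct (H b (or_introl eq_refl)) as [e2 [He2 H2]].
    exists (Rmin e1 e2). split; [apply Rmin_pos; auto|].
    intros a [<-|ha].
    + apply (Hm b e2); auto. split; [apply Rmin_pos; auto| apply Rmin_r].
    + apply (Hm a e1); auto. split; [apply Rmin_pos; auto| apply Rmin_l].
Qed.

Lemma list_common_bounds {T} (Pr : T -> nat -> nat -> Prop) :
  (forall a N K N' K', Pr a N K -> (N <= N')%nat -> (K <= K')%nat -> Pr a N' K') ->
  forall L, (forall a, In a L -> exists N K, Pr a N K) -> exists N K, forall a, In a L -> Pr a N K.
Proof.
  intros Hm L. induction L as [|b L IH]; intros H.
  - exists 0%nat, 0%nat. intros a [].
  - destruct IH as [N1 [K1 H1]]; [intros a ha; apply H; right; auto|].
    destruct (H b (or_introl eq_refl)) as [N2 [K2 H2]].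
    exists (max N1 N2), (max K1 K2). intros a [<-|ha].
    + apply (Hm b N2 K2); auto; lia.
    + apply (Hm a N1 K1); auto; lia.
Qed.

Lemma sum_f_R0_nonneg (f : nat -> R) N : (forall n, 0 <= f n) -> 0 <= sum_f_R0 f N.
Proof. intros H; induction N; simpl; [auto|]. specialize (H (S N)). lra. Qed.

Lemma sum_f_R0_ge_term (f : nat -> R) N n :
  (forall m, 0 <= f m) -> (n <= N)%nat -> f n <= sum_f_R0 f N.
Proof.
  intros H Hn. induction N.
  - assert (n = 0%nat) by lia. subst. simpl. lra.
  - destruct (Nat.eq_dec n (S N)) as [->|hn].
    + simpl. pose proof (sum_f_R0_nonneg f N H). lra.
    + simpl. specialize (H (S N)). assert (f n <= sum_f_R0 f N) by (apply IHN; lia). lra.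
Qed.

Lemma sum_f_R0_le (f g : nat -> R) N :
  (forall n, (n <= N)%nat -> f n <= g n) -> sum_f_R0 f N <= sum_f_R0 g N.
Proof. intros H; induction N; simpl; [apply H; lia|].
  assert (sum_f_R0 f N <= sum_f_R0 g N) by (apply IHN; intros; apply H; lia).
  specialize (H (S N) (le_n _)). lra. Qed.

Lemma sum_f_R0_const (c : R) n : sum_f_R0 (fun _ => c) n = INR (S n) * c.
Proof. induction n; simpl sum_f_R0; [simpl; ring|]. rewrite IHn, (S_INR (S n)). ring. Qed.

Lemma sum_f_R0_half_pow N : sum_f_R0 (fun n => (/ 2) ^ (S n)) N <= 1 - (/ 2) ^ (S N).
Proof. induction N; simpl; [lra|]. simpl in IHN. lra. Qed.

Lemma sum_absorb_half_geometric (x : nat -> R) (C : R) N : 0 < C ->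
  1 <= sum_f_R0 (fun n => C * x n + / 2 * (/ 2) ^ S n) N -> / (2 * C) <= sum_f_R0 x N.
Proof.
  intros HC H.
  replace (sum_f_R0 (fun n => C * x n + / 2 * (/ 2) ^ S n) N)
    with (C * sum_f_R0 x N + / 2 * sum_f_R0 (fun n => (/ 2) ^ S n) N) in H
    by (rewrite !scal_sum, <- plus_sum; apply sum_eq; intros; ring).
  pose proof (sum_f_R0_half_pow N). assert (0 <= (/ 2) ^ S N) by (apply pow_le; lra).
  assert (1 / 2 <= sum_f_R0 x N * C) by nra.
  apply (Rmult_le_reg_r (2 * C)); [lra|]. rewrite Rinv_l; lra.
Qed.

Fixpoint lsum {T : Type} (f : T -> R) (l : list T) : R :=
  match l with nil => 0 | x :: l' => f x + lsum f l' end.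

Lemma lsum_app {T} (f : T -> R) l1 l2 : lsum f (l1 ++ l2) = lsum f l1 + lsum f l2.
Proof. induction l1; simpl; [ring| rewrite IHl1; ring]. Qed.

Lemma lsum_le {T} (f g : T -> R) l : (forall x, In x l -> f x <= g x) -> lsum f l <= lsum g l.
Proof. induction l; simpl; intros H; [lra|]. pose proof (H a (or_introl eq_refl)).
  assert (lsum f l <= lsum g l) by (apply IHl; auto). lra. Qed.

Lemma lsum_lt_some {T} (f h : T -> R) L : (forall x, In x L -> f x <= h x) ->
  (exists x, In x L /\ f x < h x) -> lsum f L < lsum h L.
Proof.
  induction L as [|a L IH]; intros H1 [x [Hx Hfx]]; [contradiction|]. simpl.
  destruct Hx as [<-|Hx].
  - assert (lsum f L <= lsum h L) by (apply lsum_le; intros; apply H1; right; auto). lra.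
  - assert (lsum f L < lsum h L) by (apply IH; [intros; apply H1; right; auto| exists x; auto]).
    pose proof (H1 a (or_introl eq_refl)). lra.
Qed.

Lemma lsum_ext {T} (f g : T -> R) l : (forall x, In x l -> f x = g x) -> lsum f l = lsum g l.
Proof. induction l; simpl; intros H; [lra|]. rewrite (H a (or_introl eq_refl)), IHl; auto. Qed.

Lemma lsum_nonneg {T} (f : T -> R) l : (forall x, In x l -> 0 <= f x) -> 0 <= lsum f l.
Proof. induction l; simpl; intros H; [lra|]. pose proof (H a (or_introl eq_refl)).
  assert (0 <= lsum f l) by (apply IHl; auto). lra. Qed.

Lemma lsum_scal {T} (c : R) (f : T -> R) l : lsum (fun x => c * f x) l = c * lsum f l.
Proof. induction l; simpl; [ring| rewrite IHl; ring]. Qed.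

Lemma lsum_plus {T} (f g : T -> R) l : lsum (fun x => f x + g x) l = lsum f l + lsum g l.
Proof. induction l; simpl; [ring| rewrite IHl; ring]. Qed.

Lemma lsum_const_1 {T} (L : list T) : lsum (fun _ => 1) L = INR (length L).
Proof. induction L; simpl lsum; [reflexivity|]. rewrite IHL. simpl length. rewrite S_INR. ring. Qed.

Lemma lsum_map {T U} (f : U -> R) (h : T -> U) l : lsum f (map h l) = lsum (fun x => f (h x)) l.
Proof. induction l; simpl; [ring| rewrite IHl; ring]. Qed.

Lemma lsum_flat_map {T U} (f : U -> R) (h : T -> list U) l :
  lsum f (flat_map h l) = lsum (fun x => lsum f (h x)) l.
Proof. induction l; simpl; [ring| rewrite lsum_app, IHl; ring]. Qed.

Lemma lsum_filter_le {T} (f : T -> bool) (h : T -> R) L :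
  (forall x, In x L -> 0 <= h x) -> lsum h (filter f L) <= lsum h L.
Proof. induction L as [|a L IH]; simpl; intros H; [lra|].
  assert (lsum h (filter f L) <= lsum h L) by (apply IH; auto). pose proof (H a (or_introl eq_refl)).
  destruct (f a); simpl; lra. Qed.

Lemma lsum_if_filter (f : nat -> bool) (H : nat -> R) L :
  lsum (fun x => if f x then 0 else H x) L = lsum H (filter (fun x => negb (f x)) L).
Proof. induction L; simpl; [reflexivity|]. destruct (f a); simpl; rewrite IHL; ring. Qed.

Lemma lsum_sum_f_R0 {T} (F : T -> nat -> R) l N :
  lsum (fun x => sum_f_R0 (F x) N) l = sum_f_R0 (fun n => lsum (fun x => F x n) l) N.
Proof.
  induction N; simpl.
  - reflexivity.
  - rewrite lsum_plus, IHN. reflexivity.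
Qed.

Lemma sum_f_R0_lsum_seq (f : nat -> R) N : sum_f_R0 f N = lsum f (seq 0 (S N)).
Proof.
  induction N; [simpl; ring|]. rewrite (seq_S (S N)), lsum_app. simpl sum_f_R0. rewrite IHN. simpl. ring.
Qed.

Lemma lsum_seq_pow_le x s m : 0 <= x < 1 -> lsum (fun p => x ^ p) (seq s m) <= x ^ s / (1 - x).
Proof.
  intros Hx. revert s. induction m; intros s; simpl lsum.
  - apply Rmult_le_pos; [apply pow_le; lra| left; apply Rinv_0_lt_compat; lra].
  - specialize (IHm (S s)). simpl pow in IHm.
    assert (x ^ s + x * x ^ s / (1 - x) = x ^ s / (1 - x)) by (field; lra). lra.
Qed.

Definition opt_apply {T} (F : T -> R) (o : option T) : R :=
  match o with Some w => F w | None => 0 end.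

Lemma sum_nth_error_le_lsum {T} (F : T -> R) L N : (forall x, In x L -> 0 <= F x) ->
  sum_f_R0 (fun i => opt_apply F (nth_error L i)) N <= lsum F L.
Proof.
  revert N. induction L as [|x L IH]; intros N HF.
  - simpl. assert (sum_f_R0 (fun i => opt_apply F (nth_error (@nil T) i)) N = 0).
    { induction N; simpl; rewrite ?nth_error_nil; simpl; [reflexivity|]. rewrite IHN. ring. }
    lra.
  - destruct N.
    + simpl. assert (0 <= lsum F L) by (apply lsum_nonneg; intros; apply HF; right; auto). lra.
    + rewrite decomp_sum by lia. simpl. simpl pred.
      assert (sum_f_R0 (fun i => opt_apply F (nth_error L i)) N <= lsum F L)
        by (apply IH; intros; apply HF; right; auto).
      lra.
Qed.

Definition indicator (P : Prop) : R := if excluded_middle_informative P then 1 else 0.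

Lemma indicator_ge0 P : 0 <= indicator P.
Proof. unfold indicator; destruct excluded_middle_informative; lra. Qed.

Lemma indicator_true (P : Prop) : P -> indicator P = 1.
Proof. unfold indicator; destruct excluded_middle_informative; tauto. Qed.

Lemma indicator_false (P : Prop) : ~ P -> indicator P = 0.
Proof. unfold indicator; destruct excluded_middle_informative; tauto. Qed.

Lemma lsum_indicator {T} (P : T -> Prop) l :
  exists l', incl l' l /\ (forall x, In x l' -> P x) /\ (NoDup l -> NoDup l') /\
    lsum (fun x => indicator (P x)) l = INR (length l').
Proof.
  induction l as [|a l IH]; simpl.
  - exists nil. split; [intros x H; inversion H|]. split; [intros x []|].
    split; [intros; constructor|reflexivity].
  - destruct IH as [l' [H1 [H2 [H3 H4]]]].
    destruct (classic (P a)) as [h|h].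
    + exists (a :: l'). repeat split.
      * intros x [<-|hx]; [left; auto| right; auto].
      * intros x [<-|hx]; auto.
      * intros Hnd. inversion Hnd; subst. constructor; auto.
      * rewrite indicator_true by auto. rewrite H4. simpl length. rewrite S_INR. ring.
    + exists l'. repeat split.
      * intros x hx; right; auto.
      * auto.
      * intros Hnd. inversion Hnd; subst. auto.
      * rewrite indicator_false by auto. rewrite H4. ring.
Qed.

(** * Hausdorff measure and dimension on the line *)

Lemma pw_pos x s : 0 < x -> pw x s = exp (s * ln x).
Proof. intros H. unfold pw. destruct (Rle_dec x 0); [lra|]. reflexivity. Qed.

Lemma pw_ge0 x s : 0 <= pw x s.
Proof. unfold pw. destruct (Rle_dec x 0); [lra|]. unfold Rpower. left; apply exp_pos. Qed.

Lemma H_null_H_infinite_absurd (s : R) (X : R -> Prop) :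
  0 < s -> H_null s X -> H_infinite s X -> False.
Proof.
  intros Hs Hn Hi. destruct (Hi 1) as [del [Hdel Hd]].
  set (e := Rmin 1 (exp (s * ln del))).
  assert (He : 0 < e) by (apply Rmin_pos; [lra| apply exp_pos]).
  destruct (Hn e He) as [a [b [Hab [Hcov Hsum]]]].
  assert (Hterm : forall n, pw (b n - a n) s < e).
  { intros n. eapply Rle_lt_trans; [|apply (Hsum n)].
    apply (sum_f_R0_ge_term (fun n => pw (b n - a n) s) n n); [|lia].
    intros m. apply pw_ge0. }
  destruct (Hd a b) as [N HN]; auto.
  - intros n. split; [apply Hab|]. specialize (Hterm n). specialize (Hab n).
    destruct (Rle_dec (b n - a n) del) as [h|h]; [lra|]. exfalso.
    apply Rnot_le_lt in h. rewrite pw_pos in Hterm by lra.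
    assert (exp (s * ln del) < exp (s * ln (b n - a n))).
    { apply exp_increasing. apply Rmult_lt_compat_l; auto. apply ln_increasing; lra. }
    assert (e <= exp (s * ln del)) by apply Rmin_r. lra.
  - specialize (Hsum N). assert (e <= 1) by apply Rmin_l. lra.
Qed.

Lemma hausdorff_dim_unique (X : R -> Prop) d1 d2 :
  hausdorff_dim X d1 -> hausdorff_dim X d2 -> d1 = d2.
Proof.
  intros [H1a [H1b H1c]] [H2a [H2b H2c]].
  destruct (Rtotal_order d1 d2) as [h|[h|h]]; auto; exfalso.
  - apply (H_null_H_infinite_absurd ((d1 + d2) / 2) X); [lra| apply H1b; lra| apply H2c; lra].
  - apply (H_null_H_infinite_absurd ((d1 + d2) / 2) X); [lra| apply H2b; lra| apply H1c; lra].
Qed.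

(* Degenerate intervals [f n, f n] have pw-length 0 in every dimension. *)
Lemma countable_H_null (X : R -> Prop) (f : nat -> R) s :
  (forall x, X x -> exists n, f n = x) -> H_null s X.
Proof.
  intros Hf eps He. exists f, f. split; [intros; lra|]. split.
  - intros x Hx. destruct (Hf x Hx) as [n <-]. exists n. lra.
  - intros N. assert (H0 : forall n, pw (f n - f n) s = 0)
      by (intros; unfold pw; rewrite Rminus_diag; destruct Rle_dec; lra).
    replace (sum_f_R0 (fun n => pw (f n - f n) s) N) with 0; [lra|].
    induction N; simpl; rewrite H0; [ring|]. rewrite <- IHN. ring.
Qed.

Lemma H_null_1_leb_null (X : R -> Prop) : H_null 1 X -> leb_null X.
Proof.
  intros H eps He. destruct (H eps He) as [a [b [Hab [Hc Hs]]]]. exists a, b. split; auto. split; auto.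
  intros N. eapply Rle_lt_trans; [|apply (Hs N)]. right. apply sum_eq. intros n _.
  unfold pw. destruct Rle_dec as [h|h].
  - specialize (Hab n). lra.
  - rewrite Rpower_1; auto. lra.
Qed.

Lemma open_cover_total_length n : forall (L : list (R * R)) c d, (length L <= n)%nat -> c <= d ->
  (forall p, In p L -> fst p <= snd p) ->
  (forall z, c <= z <= d -> exists p, In p L /\ fst p < z < snd p) ->
  d - c <= lsum (fun p => snd p - fst p) L.
Proof.
  induction n; intros L c d Hlen Hcd Hp Hcov.
  - destruct (Hcov c) as [p [Hin _]]; [lra|]. destruct L; [contradiction| simpl in Hlen; lia].
  - destruct (Hcov c) as [p [Hin Hpc]]; [lra|].
    apply in_split in Hin as [L1 [L2 E]]. subst L.
    rewrite lsum_app. simpl.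
    assert (H1 : 0 <= lsum (fun p => snd p - fst p) L1)
      by (apply lsum_nonneg; intros x hx; pose proof (Hp x (in_or_app _ _ _ (or_introl hx))); lra).
    assert (H2 : 0 <= lsum (fun p => snd p - fst p) L2)
      by (apply lsum_nonneg; intros x hx;
          pose proof (Hp x (in_or_app _ _ _ (or_intror (or_intror hx) : In x L1 \/ In x (p :: L2)))); lra).
    destruct (Rlt_le_dec d (snd p)) as [h|h]; [lra|].
    assert (IH : d - snd p <= lsum (fun p => snd p - fst p) (L1 ++ L2)).
    { apply IHn; auto.
      - rewrite length_app in *. simpl in Hlen. lia.
      - intros x hx. apply in_app_or in hx as [hx|hx]; apply Hp; apply in_or_app; [left|right; right]; auto.
      - intros z Hz. destruct (Hcov z) as [p' [Hp' Hz']]; [lra|]. exists p'. split; auto.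
        apply in_app_or in Hp' as [Hp'|[<-|Hp']]; [apply in_or_app; auto| lra| apply in_or_app; auto]. }
    rewrite lsum_app in IH. lra.
Qed.

Lemma compact_cover_total_length (c d : R) (lo hi : nat -> R) : c <= d -> (forall n, lo n <= hi n) ->
  (forall z, c <= z <= d -> exists n, lo n < z < hi n) ->
  exists N, d - c <= sum_f_R0 (fun n => hi n - lo n) N.
Proof.
  intros Hcd Hlh Hcov.
  assert (Hcf : forall x, (exists y, (fun x y => exists n, x = INR n /\ lo n < y < hi n) x y) ->
                          (fun x => exists n : nat, x = INR n) x).
  { intros x [y [n [E _]]]. exists n; auto. }
  set (fam := mkfamily (fun x => exists n : nat, x = INR n)
                (fun x y => exists n, x = INR n /\ lo n < y < hi n) Hcf).
  assert (Hco : covering_open_set (fun z => c <= z <= d) fam).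
  { split.
    - intros z Hz. destruct (Hcov z Hz) as [n Hn]. exists (INR n). simpl. exists n. auto.
    - intros x y [n [E Hn]].
      assert (Hp : 0 < Rmin (y - lo n) (hi n - y)) by (apply Rmin_pos; lra).
      exists (mkposreal _ Hp). intros z Hz. unfold disc in Hz. simpl in Hz. exists n. split; auto.
      pose proof (Rmin_l (y - lo n) (hi n - y)). pose proof (Rmin_r (y - lo n) (hi n - y)).
      apply Rabs_def2 in Hz. lra. }
  destruct (compact_P3 c d fam Hco) as [D [Hcv [lr Hlr]]].
  destruct (list_bounded_by_nat lr) as [N HN]. exists N.
  set (L := map (fun n => (lo n, hi n)) (seq 0 (S N))).
  replace (sum_f_R0 (fun n => hi n - lo n) N) with (lsum (fun p => snd p - fst p) L)
    by (unfold L; rewrite lsum_map, sum_f_R0_lsum_seq; reflexivity).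
  apply (open_cover_total_length (length L)); auto.
  - intros p hp. unfold L in hp. apply in_map_iff in hp as [n [<- _]]. simpl. auto.
  - intros z Hz. destruct (Hcv z Hz) as [y Hy]. simpl in Hy. destruct Hy as [[n [E Hn]] HD].
    assert (In y lr) by (apply Hlr; split; [exists n; auto| auto]).
    assert (INR n <= INR N) by (rewrite <- E; apply HN; auto). apply INR_le in H0.
    exists (lo n, hi n). split; auto. unfold L. apply in_map_iff. exists n. split; [reflexivity|].
    apply in_seq. lia.
Qed.

(* Enlarging the n-th interval of a cover by (b - a)/8 * 2^-(n+1) on both sides makes it an
   open cover of the middle half of (a, b), to which Heine-Borel applies. *)
Lemma leb_null_no_interval (X : R -> Prop) a b :
  leb_null X -> a < b -> exists x, a < x < b /\ ~ X x.
Proof.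
  intros Hnull Hab. apply NNPP. intros Hn.
  assert (Hall : forall x, a < x < b -> X x).
  { intros x Hx. apply NNPP. intros Hnx. apply Hn. exists x. auto. }
  set (len := (b - a) / 2).
  assert (Hlen : 0 < len) by (unfold len; lra).
  destruct (Hnull (len / 2)) as [aa [bb [Hab2 [Hcov Hsum]]]]; [lra|].
  set (eta := fun n : nat => len / 8 * (/ 2) ^ (S n)).
  destruct (compact_cover_total_length (a + (b - a) / 4) (b - (b - a) / 4)
              (fun n => aa n - eta n) (fun n => bb n + eta n)) as [N HN].
  - lra.
  - intros n. specialize (Hab2 n). unfold eta. assert (0 <= (/ 2) ^ S n) by (apply pow_le; lra). nra.
  - intros z Hz. destruct (Hcov z) as [n Hnn]; [apply Hall; lra|]. exists n.
    unfold eta. assert (0 < (/ 2) ^ S n) by (apply pow_lt; lra). split; nra.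
  - replace (sum_f_R0 (fun n => bb n + eta n - (aa n - eta n)) N) with
      (sum_f_R0 (fun n => bb n - aa n) N + len / 4 * sum_f_R0 (fun n => (/ 2) ^ S n) N) in HN.
    + pose proof (sum_f_R0_half_pow N). pose proof (Hsum N).
      assert (0 <= (/2) ^ S N) by (apply pow_le; lra).
      unfold len in *. nra.
    + rewrite scal_sum, <- plus_sum. apply sum_eq. intros i _. unfold eta, len. field.
Qed.

Lemma closed_leb_null_nowhere_dense (X : R -> Prop) :
  Defs.closed_set X -> leb_null X -> nowhere_dense X.
Proof.
  intros Hcl Hnull a b Hab.
  destruct (leb_null_no_interval X a b Hnull Hab) as [x [Hxab Hnx]].
  assert (He : exists eps, 0 < eps /\ forall y, X y -> eps <= Rabs (y - x)).
  { apply NNPP. intros Hn. apply Hnx. apply Hcl. intros eps Heps. apply NNPP. intros Hn2. apply Hn.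
    exists eps. split; auto. intros y Hy. apply Rnot_lt_le. intros Hlt. apply Hn2. exists y. auto. }
  destruct He as [eps [Heps Hy]].
  set (e := Rmin eps (Rmin (x - a) (b - x)) / 2).
  assert (He1 : 0 < Rmin eps (Rmin (x - a) (b - x))) by (repeat apply Rmin_pos; lra).
  pose proof (Rmin_l eps (Rmin (x - a) (b - x))). pose proof (Rmin_r eps (Rmin (x - a) (b - x))).
  pose proof (Rmin_l (x - a) (b - x)). pose proof (Rmin_r (x - a) (b - x)).
  exists (x - e), (x + e). unfold e. repeat split; try lra.
  intros z Hz. exists e. unfold e. split; [lra|]. intros y HyX. specialize (Hy y HyX).
  pose proof (Rabs_triang (y - z) (z - x)). replace (y - z + (z - x)) with (y - x) in H3 by ring.
  assert (Rabs (z - x) < Rmin eps (Rmin (x - a) (b - x)) / 2) by (apply Rabs_def1; lra). lra.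
Qed.

(* A uniform lower bound c for the d-dimensional sums of covers by intervals of length
   <= 1 forces H^s = +oo for s < d: on intervals of length <= delta, pw L s >= delta^(s-d) pw L d. *)
Lemma H_infinite_of_content (X : R -> Prop) s d c : 0 < s < d -> 0 < c ->
  (forall a b : nat -> R, (forall n, a n <= b n <= a n + 1) ->
     (forall x, X x -> exists n, a n <= x <= b n) ->
     exists N, c <= sum_f_R0 (fun n => pw (b n - a n) d) N) ->
  H_infinite s X.
Proof.
  intros Hs Hc Hcont M.
  set (Mp := Rmax M c). assert (HMp : c <= Mp) by apply Rmax_r.
  assert (HMc : 1 <= Mp / c).
  { apply (Rmult_le_reg_r c); [lra|]. unfold Rdiv. rewrite Rmult_assoc, Rinv_l; lra. }
  set (delta := exp (ln (Mp / c) / (s - d))).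
  assert (Hdel : exp ((s - d) * ln delta) = Mp / c).
  { unfold delta. rewrite ln_exp. replace ((s - d) * (ln (Mp / c) / (s - d))) with (ln (Mp / c)) by (field; lra).
    apply exp_ln. lra. }
  assert (Hdel1 : delta <= 1).
  { unfold delta. rewrite <- exp_0. apply exp_le_mono.
    assert (0 <= ln (Mp / c)) by (rewrite <- ln_1; apply ln_le_mono; lra).
    unfold Rdiv at 1. assert (/ (s - d) < 0) by (apply Rinv_lt_0_compat; lra). nra. }
  exists delta. split; [apply exp_pos|]. intros a b Hab Hcov.
  destruct (Hcont a b) as [N HN]; [intros n; specialize (Hab n); lra| auto|].
  exists N.
  assert (Hterm : forall n, Mp / c * pw (b n - a n) d <= pw (b n - a n) s).
  { intros n. specialize (Hab n). destruct (Rle_dec (b n - a n) 0) as [h|h].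
    - unfold pw. destruct (Rle_dec (b n - a n) 0); [lra| contradiction].
    - rewrite !pw_pos by lra. rewrite <- Hdel, <- exp_plus. apply exp_le_mono.
      assert (ln (b n - a n) <= ln delta) by (apply ln_le_mono; lra). nra. }
  eapply Rle_trans; [|apply sum_f_R0_le; intros n _; apply Hterm].
  replace (sum_f_R0 (fun n => Mp / c * pw (b n - a n) d) N)
    with (Mp / c * sum_f_R0 (fun n => pw (b n - a n) d) N) by (rewrite scal_sum; apply sum_eq; intros; ring).
  assert (M <= Mp) by apply Rmax_l.
  replace Mp with (Mp / c * c) in H by (field; lra). nra.
Qed.

(** * Digit attractors *)

Section Attractor.
Variable q : nat. Hypothesis hq : (2 <= q)%nat.
Variable A : list nat. Hypothesis A_nd : NoDup A. Hypothesis A_ne : A <> nil.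
Variable l : nat -> nat. Hypothesis l_pos : forall a, In a A -> (1 <= l a)%nat.
Variable Rm : nat. Hypothesis l_le : forall a, In a A -> (l a <= Rm)%nat.
Variable g : nat -> Z.
Hypothesis g_inj : forall a a' k, In a A -> In a' A -> (g a - g a' = Z.of_nat q * k)%Z -> a = a'.
Variable G : R. Hypothesis G_nn : 0 <= G. Hypothesis G_bd : forall a, In a A -> Rabs (IZR (g a)) <= G.
Variable c0 : R.

Definition Q := INR q.

Lemma Q_gt1 : 1 < Q.
Proof. unfold Q. apply (le_INR 2) in hq. simpl in hq. lra. Qed.

Definition ratio := - / Q.

Fixpoint wlen (w : list nat) : nat :=
  match w with nil => 0%nat | a :: w' => (l a + wlen w')%nat end.
Fixpoint wval (w : list nat) : R :=
  match w with nil => 0 | a :: w' => ratio ^ (l a) * (IZR (g a) + wval w') end.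
Fixpoint zpow (n : nat) : Z :=
  match n with O => 1%Z | S n' => (- Z.of_nat q * zpow n')%Z end.
Fixpoint wcode (w : list nat) : Z :=
  match w with nil => 0%Z | a :: w' => (g a * zpow (wlen w') + wcode w')%Z end.

(* Infinite words are sequences al indexed from 1, as alpha in the paper; al 0 is ignored. *)
Definition prefix (al : nat -> nat) (j : nat) : list nat := map al (seq 1 j).
Definition admissible (al : nat -> nat) : Prop := forall n, (1 <= n)%nat -> In (al n) A.
Definition over_A (w : list nat) : Prop := forall a, In a w -> In a A.
Definition expands (al : nat -> nat) (x : R) : Prop := Un_cv (fun n => c0 + wval (prefix al n)) x.
Definition attractor (x : R) : Prop := exists al, admissible al /\ expands al x.
Definition tail_radius := G / (Q - 1).

Lemma exists_in_A : exists a, In a A.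
Proof. apply exists_In_of_neq_nil, A_ne. Qed.

Lemma tail_radius_ge0 : 0 <= tail_radius.
Proof.
  unfold tail_radius. pose proof Q_gt1.
  unfold Rdiv; apply Rmult_le_pos; [lra|left; apply Rinv_0_lt_compat; lra].
Qed.

Lemma prefix_S al j : prefix al (S j) = prefix al j ++ [al (S j)].
Proof. unfold prefix. rewrite seq_S, map_app. simpl. reflexivity. Qed.

Lemma prefix_length al j : length (prefix al j) = j.
Proof. unfold prefix. rewrite length_map, length_seq. reflexivity. Qed.

Lemma prefix_over_A al j : admissible al -> over_A (prefix al j).
Proof. intros Hc a Ha. unfold prefix in Ha. apply in_map_iff in Ha as [n [<- Hn]].
  apply in_seq in Hn. apply Hc. lia. Qed.

Lemma prefix_ext al be j : (forall n, (1 <= n)%nat -> al n = be n) -> prefix al j = prefix be j.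
Proof. intros H. unfold prefix. apply map_ext_in. intros n hn. apply in_seq in hn. apply H; lia. Qed.

Lemma wlen_app w v : wlen (w ++ v) = (wlen w + wlen v)%nat.
Proof. induction w; simpl; auto. rewrite IHw. lia. Qed.

Lemma wlen_ge_length w : over_A w -> (length w <= wlen w)%nat.
Proof. induction w; simpl; intros H; auto.
  assert (1 <= l a)%nat by (apply l_pos; apply H; left; auto).
  assert (length w <= wlen w)%nat by (apply IHw; intros b hb; apply H; right; auto). lia. Qed.

Lemma wval_app w v : wval (w ++ v) = wval w + ratio ^ (wlen w) * wval v.
Proof. induction w; simpl.
  - ring.
  - rewrite IHw, pow_add. ring. Qed.

Lemma wval_snoc w a : wval (w ++ [a]) = wval w + ratio ^ (wlen w + l a) * IZR (g a).
Proof. rewrite wval_app. simpl. rewrite pow_add. ring. Qed.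

Lemma Rabs_ratio_pow n : Rabs (ratio ^ n) = (/ Q) ^ n.
Proof. rewrite <- RPow_abs. unfold ratio. rewrite Rabs_Ropp, Rabs_pos_eq; auto.
  pose proof Q_gt1. left. apply Rinv_0_lt_compat. lra. Qed.

Lemma invQ_pos : 0 < / Q.
Proof. pose proof Q_gt1. apply Rinv_0_lt_compat. lra. Qed.
Lemma invQ_lt1 : / Q < 1.
Proof. pose proof Q_gt1. rewrite <- Rinv_1. apply Rinv_lt_contravar; lra. Qed.

Lemma invQ_pow_pos n : 0 < (/ Q) ^ n.
Proof. apply pow_lt. apply invQ_pos. Qed.

Lemma invQ_pow_le m n : (m <= n)%nat -> (/ Q) ^ n <= (/ Q) ^ m.
Proof.
  intros H. induction H; [lra|]. simpl. pose proof invQ_pos. pose proof invQ_lt1.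
  pose proof (invQ_pow_pos m0). nra.
Qed.

Lemma letter_tail_le S0 a : In a A ->
  Rabs (ratio ^ (S0 + l a) * IZR (g a)) + tail_radius * (/ Q) ^ (S0 + l a) <= tail_radius * (/ Q) ^ S0.
Proof.
  intros Ha. pose proof (l_pos a Ha). pose proof (G_bd a Ha). pose proof Q_gt1.
  assert (Ht : (/ Q) ^ (S0 + l a) * Q <= (/ Q) ^ S0).
  { rewrite pow_add. replace ((/ Q) ^ S0) with ((/ Q) ^ S0 * ((/ Q) ^ 1 * Q)) at 2 by (simpl; field; lra).
    rewrite <- Rmult_assoc. apply Rmult_le_compat_r; [lra|].
    apply Rmult_le_compat_l; [left; apply invQ_pow_pos| apply invQ_pow_le; auto]. }
  rewrite Rabs_mult, Rabs_ratio_pow.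
  replace ((/ Q) ^ (S0 + l a) * Rabs (IZR (g a)) + tail_radius * (/ Q) ^ (S0 + l a))
    with ((/ Q) ^ (S0 + l a) * (Rabs (IZR (g a)) + tail_radius)) by ring.
  assert (E : G + tail_radius = tail_radius * Q) by (unfold tail_radius; field; lra).
  pose proof (invQ_pow_pos (S0 + l a)). pose proof tail_radius_ge0. nra.
Qed.

Lemma wval_prefix_tail al j n : admissible al -> (j <= n)%nat ->
  Rabs (wval (prefix al n) - wval (prefix al j)) + tail_radius * (/ Q) ^ (wlen (prefix al n))
    <= tail_radius * (/ Q) ^ (wlen (prefix al j)).
Proof.
  intros Hc Hjn. induction Hjn.
  - rewrite Rminus_diag, Rabs_R0. lra.
  - rewrite prefix_S, wval_snoc, wlen_app. simpl wlen. rewrite Nat.add_0_r.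
    pose proof (letter_tail_le (wlen (prefix al m)) (al (S m)) (Hc (S m) ltac:(lia))).
    pose proof (Rabs_triang (wval (prefix al m) - wval (prefix al j))
                  (ratio ^ (wlen (prefix al m) + l (al (S m))) * IZR (g (al (S m))))).
    replace (wval (prefix al m) + ratio ^ (wlen (prefix al m) + l (al (S m))) * IZR (g (al (S m)))
             - wval (prefix al j))
      with (wval (prefix al m) - wval (prefix al j)
            + ratio ^ (wlen (prefix al m) + l (al (S m))) * IZR (g (al (S m)))) by ring.
    lra.
Qed.

Lemma wlen_prefix_ge al j : admissible al -> (j <= wlen (prefix al j))%nat.
Proof. intros Hc. rewrite <- (prefix_length al j) at 1. apply wlen_ge_length, prefix_over_A; auto. Qed.

Lemma expands_exists al : admissible al -> exists x, expands al x.
Proof.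
  intros Hc.
  assert (Hcc : Cauchy_crit (fun n => c0 + wval (prefix al n))).
  { intros eps He.
    destruct (geometric_eventually_lt (/ Q) (2 * tail_radius) eps) as [N HN]; auto.
    { split; [left; apply invQ_pos| apply invQ_lt1]. }
    exists N. intros n m Hn Hm. unfold R_dist.
    assert (Hb : forall k, (N <= k)%nat -> Rabs (wval (prefix al k) - wval (prefix al N)) <= tail_radius * (/ Q) ^ N).
    { intros k Hk. pose proof (wval_prefix_tail al N k Hc Hk).
      pose proof (invQ_pow_pos (wlen (prefix al k))). pose proof tail_radius_ge0.
      assert ((/ Q) ^ wlen (prefix al N) <= (/ Q) ^ N) by (apply invQ_pow_le, wlen_prefix_ge; auto).
      nra. }
    specialize (HN N (le_n _)).
    replace (c0 + wval (prefix al n) - (c0 + wval (prefix al m))) with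
      ((wval (prefix al n) - wval (prefix al N)) - (wval (prefix al m) - wval (prefix al N))) by ring.
    eapply Rle_lt_trans; [apply Rabs_triang|]. rewrite Rabs_Ropp.
    pose proof (Hb n Hn). pose proof (Hb m Hm). lra. }
  destruct (R_complete _ Hcc) as [x Hx]. exists x. exact Hx.
Qed.

Lemma expands_unique al x y : expands al x -> expands al y -> x = y.
Proof. intros H1 H2. eapply UL_sequence; eauto. Qed.

Lemma expands_near al x j : admissible al -> expands al x ->
  Rabs (x - c0 - wval (prefix al j)) <= tail_radius * (/ Q) ^ (wlen (prefix al j)).
Proof.
  intros Hc Hv. replace (x - c0 - wval (prefix al j)) with (x - (c0 + wval (prefix al j))) by ring.
  apply (Un_cv_dist_le _ _ _ _ j Hv). intros n Hn.
  pose proof (wval_prefix_tail al j n Hc Hn). pose proof (invQ_pow_pos (wlen (prefix al n))).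
  pose proof tail_radius_ge0.
  replace (c0 + wval (prefix al n) - (c0 + wval (prefix al j)))
    with (wval (prefix al n) - wval (prefix al j)) by ring.
  nra.
Qed.

Lemma expands_ext al be x : (forall n, (1 <= n)%nat -> al n = be n) -> expands al x -> expands be x.
Proof. intros H Hv. unfold expands. intros e He. destruct (Hv e He) as [N HN]. exists N. intros n Hn.
  rewrite <- (prefix_ext al be n H). apply HN; auto. Qed.

Lemma zpow_add m n : zpow (m + n) = (zpow m * zpow n)%Z.
Proof. induction m.
  - change (zpow (0 + n)) with (zpow n). change (zpow 0) with 1%Z. ring.
  - change (zpow (S m + n)) with (- Z.of_nat q * zpow (m + n))%Z. change (zpow (S m)) with (- Z.of_nat q * zpow m)%Z.
    rewrite IHm; ring. Qed.

Lemma zpow_neq0 n : zpow n <> 0%Z.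
Proof. induction n; [discriminate|]. change (zpow (S n)) with (- Z.of_nat q * zpow n)%Z.
  intros H. apply Z.mul_eq_0 in H as [H|H]; [lia|auto]. Qed.

Lemma zpow_IZR n : IZR (zpow n) = (- Q) ^ n.
Proof. induction n; [reflexivity|]. change (zpow (S n)) with (- Z.of_nat q * zpow n)%Z.
  rewrite mult_IZR, opp_IZR, IHn, <- INR_IZR_INZ. reflexivity. Qed.

Lemma wcode_wval w : IZR (wcode w) = wval w * (- Q) ^ (wlen w).
Proof.
  induction w; [simpl; ring|]. cbn [wcode wval wlen].
  rewrite plus_IZR, mult_IZR, zpow_IZR, IHw, pow_add.
  assert (H : ratio ^ l a * (- Q) ^ l a = 1).
  { rewrite <- Rpow_mult_distr. unfold ratio. replace (- / Q * - Q) with 1. apply pow1.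
    pose proof Q_gt1. field. lra. }
  transitivity ((ratio ^ l a * (- Q) ^ l a) * ((IZR (g a) + wval w) * (- Q) ^ wlen w)); [rewrite H; ring| ring].
Qed.

Lemma wcode_snoc w a : wcode (w ++ [a]) = (wcode w * zpow (l a) + g a)%Z.
Proof.
  induction w.
  - cbn [app wcode wlen]. change (zpow 0) with 1%Z. ring.
  - cbn [app wcode]. rewrite IHw, wlen_app. cbn [wlen]. rewrite Nat.add_0_r, zpow_add. ring.
Qed.

Lemma over_A_app w v : over_A (w ++ v) -> over_A w /\ over_A v.
Proof. intros H; split; intros b hb; apply H; apply in_or_app; auto. Qed.

Lemma wcode_inj w w' : over_A w -> over_A w' -> wlen w = wlen w' -> wcode w = wcode w' -> w = w'.
Proof.
  revert w'. induction w as [|a w IH] using rev_ind; intros w' Hw Hw' HS HN.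
  - destruct w' as [|b w'']; auto. simpl in HS.
    assert (1 <= l b)%nat by (apply l_pos; apply Hw'; left; auto). lia.
  - destruct w' as [|b w''].
    + rewrite wlen_app in HS. simpl in HS.
      assert (1 <= l a)%nat by (apply l_pos; apply Hw; apply in_or_app; right; left; auto). lia.
    + destruct (exists_last (l := b :: w'')) as [w0' [a' E]]; [discriminate|].
      rewrite E in *. clear E b w''.
      apply over_A_app in Hw as [Hw1 Hw2]. apply over_A_app in Hw' as [Hw1' Hw2'].
      assert (Ha : In a A) by (apply Hw2; left; auto).
      assert (Ha' : In a' A) by (apply Hw2'; left; auto).
      rewrite !wcode_snoc in HN. rewrite !wlen_app in HS. simpl in HS.
      pose proof (l_pos a Ha) as la1. pose proof (l_pos a' Ha') as la1'.
      assert (Eaa : a = a').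
      { destruct (l a) as [|n] eqn:Ela; [lia|]. destruct (l a') as [|n'] eqn:Ela'; [lia|].
        simpl in HN.
        apply (g_inj a a' (wcode w0' * - zpow n' - wcode w * - zpow n)%Z); auto. lia. }
      subst a'.
      assert (wcode w = wcode w0').
      { apply (Z.mul_cancel_r _ _ (zpow (l a))); [apply zpow_neq0|]. lia. }
      f_equal. apply IH; auto. lia.
Qed.

Definition cylinder (w : list nat) (y : R) : Prop :=
  exists be, admissible be /\ prefix be (length w) = w /\ expands be y.

Lemma cylinder_near w y : cylinder w y -> Rabs (y - c0 - wval w) <= tail_radius * (/ Q) ^ (wlen w).
Proof. intros [be [Hc [Hp Hv]]]. rewrite <- Hp. apply expands_near; auto. Qed.

Lemma cylinder_over_A w y : cylinder w y -> over_A w.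
Proof. intros [be [Hc [Hp Hv]]]. rewrite <- Hp. apply prefix_over_A; auto. Qed.

Lemma cylinder_wcode w y : cylinder w y ->
  Rabs (IZR (wcode w) - (y - c0) * (- Q) ^ (wlen w)) <= tail_radius.
Proof.
  intros H. apply cylinder_near in H. rewrite wcode_wval.
  replace (wval w * (- Q) ^ wlen w - (y - c0) * (- Q) ^ wlen w) with (- (y - c0 - wval w) * (- Q) ^ wlen w) by ring.
  rewrite Rabs_mult, Rabs_Ropp, <- RPow_abs, Rabs_Ropp, (Rabs_pos_eq Q) by (pose proof Q_gt1; lra).
  assert (E : (/ Q) ^ wlen w * Q ^ wlen w = 1).
  { rewrite <- Rpow_mult_distr. rewrite Rinv_l; [apply pow1| pose proof Q_gt1; lra]. }
  assert (0 < Q ^ wlen w) by (apply pow_lt; pose proof Q_gt1; lra).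
  apply (Rmult_le_compat_r (Q ^ wlen w)) in H; [|lra].
  rewrite Rmult_assoc, E, Rmult_1_r in H. exact H.
Qed.

Lemma cylinder_wcode_dist w w' y y' : cylinder w y -> cylinder w' y' -> wlen w = wlen w' ->
  Rabs (IZR (wcode w) - IZR (wcode w')) <= Rabs (y - y') * Q ^ wlen w + 2 * tail_radius.
Proof.
  intros Hw Hw' HS. pose proof (cylinder_wcode w y Hw) as C1. pose proof (cylinder_wcode w' y' Hw') as C2.
  rewrite <- HS in C2.
  assert (HQ : Rabs ((- Q) ^ wlen w) = Q ^ wlen w).
  { rewrite <- RPow_abs, Rabs_Ropp, Rabs_pos_eq; auto. pose proof Q_gt1; lra. }
  replace (IZR (wcode w) - IZR (wcode w')) with
    ((IZR (wcode w) - (y - c0) * (- Q) ^ wlen w) - (IZR (wcode w') - (y' - c0) * (- Q) ^ wlen w)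
     + (y - y') * (- Q) ^ wlen w) by ring.
  eapply Rle_trans; [apply Rabs_triang|].
  eapply Rle_trans; [apply Rplus_le_compat_r; apply Rabs_triang|].
  rewrite Rabs_Ropp, (Rabs_mult (y - y')), HQ. lra.
Qed.

(* Distinct words of equal length have distinct integer codes, and the codes of those whose
   cylinders meet [aJ, bJ] lie in an integer interval of radius K. *)
Lemma cylinders_meeting_interval (Lw : list (list nat)) (S0 : nat) (aJ bJ : R) (K : nat) :
  NoDup Lw ->
  (forall w, In w Lw -> wlen w = S0 /\ exists y, cylinder w y /\ aJ <= y <= bJ) ->
  (bJ - aJ) * Q ^ S0 + 2 * tail_radius <= INR K -> (length Lw <= 2 * K + 1)%nat.
Proof.
  intros Hnd Hw HK. destruct Lw as [|w1 Lw1]; [simpl; lia|].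
  destruct (Hw w1 (or_introl eq_refl)) as [HS1 [y1 [Hc1 Hy1]]].
  rewrite <- (length_map wcode).
  apply (Z_ball_NoDup_length _ (wcode w1) K).
  - apply NoDup_map_in; auto. intros x y hx hy e.
    destruct (Hw x hx) as [Hx1 [yx [Hcx _]]]. destruct (Hw y hy) as [Hy2 [yy [Hcy _]]].
    apply wcode_inj; auto; [eapply cylinder_over_A; eauto|eapply cylinder_over_A; eauto|congruence].
  - intros z hz. apply in_map_iff in hz as [w [<- hw]].
    destruct (Hw w hw) as [HS [y [Hc Hy]]].
    apply le_IZR. rewrite abs_IZR, minus_IZR, <- INR_IZR_INZ.
    eapply Rle_trans; [apply (cylinder_wcode_dist w w1 y y1); auto; congruence|].
    rewrite HS. assert (Rabs (y - y1) <= bJ - aJ) by (apply Rabs_le; lra).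
    assert (0 <= Q ^ S0) by (apply pow_le; pose proof Q_gt1; lra). nra.
Qed.

Definition scons (a : nat) (be : nat -> nat) (n : nat) : nat :=
  match n with O => O | S O => a | S m => be m end.

Lemma prefix_scons a be j : prefix (scons a be) (S j) = a :: prefix be j.
Proof.
  unfold prefix. simpl. f_equal. rewrite <- seq_shift, map_map. apply map_ext_in.
  intros n hn. apply in_seq in hn. destruct n; [lia|]. reflexivity.
Qed.

Lemma admissible_scons a be : In a A -> admissible be -> admissible (scons a be).
Proof. intros Ha Hc n Hn. destruct n as [|[|m]]; simpl; auto; [lia|]. apply Hc. lia. Qed.

Lemma expands_scons a be y :
  expands be y -> expands (scons a be) (c0 + ratio ^ (l a) * (IZR (g a) + (y - c0))).
Proof.
  intros Hv e He. destruct (Hv e He) as [N HN]. exists (S N). intros n Hn.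
  destruct n as [|m]; [lia|]. rewrite prefix_scons. simpl wval. unfold R_dist.
  specialize (HN m ltac:(lia)). unfold R_dist in HN.
  replace (c0 + ratio ^ l a * (IZR (g a) + wval (prefix be m)) - (c0 + ratio ^ l a * (IZR (g a) + (y - c0))))
    with (ratio ^ l a * (c0 + wval (prefix be m) - y)) by ring.
  rewrite Rabs_mult, Rabs_ratio_pow.
  assert ((/ Q) ^ l a <= 1).
  { replace 1 with ((/ Q) ^ 0) by reflexivity. apply invQ_pow_le. lia. }
  pose proof (invQ_pow_pos (l a)). pose proof (Rabs_pos (c0 + wval (prefix be m) - y)). nra.
Qed.

Lemma expands_prepend w be y : over_A w -> admissible be -> expands be y ->
  exists al, admissible al /\ prefix al (length w) = w /\
    expands al (c0 + wval w + ratio ^ (wlen w) * (y - c0)).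
Proof.
  induction w as [|a w IH]; intros Hw Hc Hv.
  - exists be. split; auto. split; [reflexivity|]. simpl.
    replace (c0 + 0 + 1 * (y - c0)) with y by ring. auto.
  - destruct IH as [al [Hal1 [Hal2 Hal3]]]; auto.
    { intros b hb; apply Hw; right; auto. }
    exists (scons a al). split; [apply admissible_scons; auto; apply Hw; left; auto|].
    split; [simpl; rewrite prefix_scons, Hal2; reflexivity|].
    pose proof (expands_scons a al _ Hal3) as H.
    replace (c0 + ratio ^ l a * (IZR (g a) + (c0 + wval w + ratio ^ wlen w * (y - c0) - c0))) with
      (c0 + wval (a :: w) + ratio ^ wlen (a :: w) * (y - c0)) in H; auto.
    simpl. rewrite pow_add. ring.
Qed.

Lemma attractor_decomp x : attractor x <->
  exists a y, In a A /\ attractor y /\ x = c0 + ratio ^ (l a) * (IZR (g a) + (y - c0)).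
Proof.
  split.
  - intros [al [Hc Hv]]. set (be := fun n => al (S n)).
    assert (Hcb : admissible be) by (intros n Hn; apply Hc; lia).
    destruct (expands_exists be Hcb) as [y Hy].
    exists (al 1%nat), y. split; [apply Hc; lia|]. split; [exists be; auto|].
    pose proof (expands_scons (al 1%nat) be y Hy) as H.
    eapply expands_unique; [exact Hv|]. eapply expands_ext; [|exact H].
    intros n Hn. destruct n as [|[|m]]; simpl; auto; lia.
  - intros [a [y [Ha [[be [Hc Hv]] ->]]]]. exists (scons a be). split.
    + apply admissible_scons; auto.
    + apply expands_scons; auto.
Qed.

Fixpoint grow_branch (f : list nat -> nat) (j : nat) : list nat :=
  match j with O => nil | S j' => grow_branch f j' ++ [f (grow_branch f j')] end.

Lemma build_branch (P : list nat -> Prop) :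
  P nil -> (forall w, P w -> exists a, In a A /\ P (w ++ [a])) ->
  exists al, admissible al /\ forall j, P (prefix al j).
Proof.
  intros H0 Hs.
  assert (Hch : forall w, exists a, P w -> In a A /\ P (w ++ [a])).
  { intros w. destruct (classic (P w)) as [h|h].
    - destruct (Hs w h) as [a Ha]. exists a; auto.
    - exists 0%nat. tauto. }
  set (f := fun w => proj1_sig (constructive_indefinite_description _ (Hch w))).
  assert (Hf : forall w, P w -> In (f w) A /\ P (w ++ [f w])).
  { intros w. unfold f. destruct (constructive_indefinite_description _ (Hch w)). simpl. auto. }
  set (al := fun n => match n with O => O | S m => f (grow_branch f m) end).
  assert (Hpre : forall j, prefix al j = grow_branch f j).
  { induction j; [reflexivity|]. rewrite prefix_S, IHj. reflexivity. }
  assert (HP : forall j, P (grow_branch f j)).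
  { induction j; simpl; auto. apply Hf; auto. }
  exists al. split.
  - intros n Hn. destruct n; [lia|]. simpl. apply Hf, HP.
  - intros j. rewrite Hpre. auto.
Qed.

Definition adherent_cylinder (w : list nat) (x : R) : Prop :=
  forall eps, 0 < eps -> exists y, cylinder w y /\ Rabs (y - x) < eps.

Lemma cylinder_snoc w a y :
  cylinder (w ++ [a]) y <->
  exists be, admissible be /\ prefix be (S (length w)) = w ++ [a] /\ expands be y.
Proof. unfold cylinder. rewrite length_app, Nat.add_1_r. reflexivity. Qed.

(* Finitely many one-letter extensions: if none were adherent, the minimum of their
   separating radii would separate x from the cylinder of w itself. *)
Lemma adherent_cylinder_snoc w x :
  adherent_cylinder w x -> exists a, In a A /\ adherent_cylinder (w ++ [a]) x.
Proof.
  intros Hw. apply NNPP. intros Hn.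
  set (far := fun a e => ~ exists y, cylinder (w ++ [a]) y /\ Rabs (y - x) < e).
  destruct (list_common_eps far) with (L := A) as [e [He Hfar]].
  - intros a e e' He' Hq [y [Hy Hyx]]. apply Hq. exists y. split; auto. lra.
  - intros a Ha. apply NNPP. intros Hn2. apply Hn. exists a. split; auto.
    intros e He. apply NNPP. intros Hn3. apply Hn2. exists e. split; auto.
  - destruct (Hw e He) as [y [[be [h1 [h2 h3]]] Hyx]].
    apply (Hfar (be (S (length w)))); [apply h1; lia|].
    exists y. split; auto. apply cylinder_snoc. exists be. rewrite prefix_S, h2. auto.
Qed.

Lemma adherent_branch_eq al z x : admissible al -> expands al z ->
  (forall j, adherent_cylinder (prefix al j) x) -> z = x.
Proof.
  intros Hc Hz HP. apply Rminus_diag_uniq.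
  apply (eq0_of_geometric_bound (z - x) (2 * tail_radius) (/ Q));
    [split; [left; apply invQ_pos|apply invQ_lt1]|].
  intros j. apply le_epsilon. intros eps He.
  destruct (HP j eps He) as [y [Hy Hyx]].
  pose proof (expands_near al z j Hc Hz) as N1. pose proof (cylinder_near _ y Hy) as N2.
  assert ((/ Q) ^ wlen (prefix al j) <= (/ Q) ^ j) by (apply invQ_pow_le, wlen_prefix_ge; auto).
  pose proof tail_radius_ge0.
  replace (z - x) with ((z - c0 - wval (prefix al j)) - (y - c0 - wval (prefix al j)) + (y - x)) by ring.
  eapply Rle_trans; [apply Rabs_triang|].
  eapply Rle_trans; [apply Rplus_le_compat_r; apply Rabs_triang|]. rewrite Rabs_Ropp.
  nra.
Qed.

Lemma attractor_closed : Defs.closed_set attractor.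
Proof.
  intros x Hx.
  assert (H0 : adherent_cylinder nil x).
  { intros eps He. destruct (Hx eps He) as [y [[be [Hc Hv]] Hy]]. exists y. split; auto.
    exists be. auto. }
  destruct (build_branch (fun w => adherent_cylinder w x) H0 (fun w => adherent_cylinder_snoc w x))
    as [al [Hc HP]].
  destruct (expands_exists al Hc) as [z Hz]. exists al. split; auto.
  rewrite <- (adherent_branch_eq al z x); auto.
Qed.

Fixpoint words (K : nat) : list (list nat) :=
  match K with O => [nil] | S K' => flat_map (fun a => map (cons a) (words K')) A end.

Lemma In_words K v : In v (words K) <-> length v = K /\ over_A v.
Proof.
  revert v. induction K; intros v; simpl.
  - split.
    + intros [<-|[]]. split; auto. intros b [].
    + intros [H1 _]. destruct v; [left; auto| discriminate].
  - rewrite in_flat_map. split.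
    + intros [a [Ha Hv]]. apply in_map_iff in Hv as [v' [<- Hv']]. apply IHK in Hv' as [h1 h2].
      split; [simpl; auto|]. intros b [<-|hb]; auto.
    + intros [H1 H2]. destruct v as [|a v']; [discriminate|]. exists a. split; [apply H2; left; auto|].
      apply in_map. apply IHK. split; [simpl in H1; lia|]. intros b hb; apply H2; right; auto.
Qed.

Lemma NoDup_flat_map_cons (W : list (list nat)) (L : list nat) : NoDup W -> NoDup L ->
  NoDup (flat_map (fun a => map (cons a) W) L).
Proof.
  intros HW. induction L as [|a L IHL]; intros HL; simpl; [constructor|].
  inversion HL; subst.
  apply NoDup_app.
  - apply NoDup_map_in; auto. intros x y _ _ e. injection e; auto.
  - apply IHL; auto.
  - intros v hv hv'. apply in_map_iff in hv as [x [<- hx]]. apply in_flat_map in hv' as [b [hb hb']].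
    apply in_map_iff in hb' as [y [e hy]]. injection e as e1 e2. subst b. contradiction.
Qed.

Lemma NoDup_words K : NoDup (words K).
Proof.
  induction K; simpl; [constructor; [intros []|constructor]|].
  apply NoDup_flat_map_cons; auto.
Qed.

Definition weight (S0 : nat) (t : R) : R := exp (- INR S0 * t * ln Q).

Lemma weight_add m n t : weight (m + n) t = weight m t * weight n t.
Proof. unfold weight. rewrite <- exp_plus, plus_INR. f_equal. ring. Qed.

Lemma weight_pos S0 t : 0 < weight S0 t.
Proof. apply exp_pos. Qed.

Lemma weight_0 t : weight 0 t = 1.
Proof. unfold weight. simpl. replace (- 0 * t * ln Q) with 0 by ring. apply exp_0. Qed.

Lemma ln_Q_pos : 0 < ln Q.
Proof. rewrite <- ln_1. apply ln_increasing; [lra| apply Q_gt1]. Qed.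

Lemma weight_le_antimono m t t' : t <= t' -> weight m t' <= weight m t.
Proof.
  intros H. unfold weight. apply exp_le_mono. pose proof (pos_INR m). pose proof ln_Q_pos.
  assert (0 <= INR m * ln Q) by nra. nra.
Qed.

Lemma weight_lt_antimono m t t' : (1 <= m)%nat -> t < t' -> weight m t' < weight m t.
Proof.
  intros Hm H. unfold weight. apply exp_increasing. apply (le_INR 1) in Hm. simpl in Hm.
  pose proof ln_Q_pos. assert (0 < INR m * ln Q) by nra. nra.
Qed.

Lemma weight_le_length m n t : 0 <= t -> (m <= n)%nat -> weight n t <= weight m t.
Proof.
  intros Ht H. unfold weight. apply exp_le_mono. apply le_INR in H. pose proof ln_Q_pos.
  assert (0 <= t * ln Q) by nra. nra.
Qed.

Lemma weight_lt_length m n t : 0 < t -> (m < n)%nat -> weight n t < weight m t.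
Proof.
  intros Ht H. unfold weight. apply exp_increasing. apply lt_INR in H. pose proof ln_Q_pos.
  assert (0 < t * ln Q) by nra. nra.
Qed.

Lemma lsum_weight_words K t :
  lsum (fun w => weight (wlen w) t) (words K) = (lsum (fun a => weight (l a) t) A) ^ K.
Proof.
  induction K; simpl.
  - rewrite weight_0. ring.
  - rewrite lsum_flat_map, Rmult_comm, <- lsum_scal.
    apply lsum_ext. intros a _. rewrite lsum_map. cbn [wlen].
    rewrite <- IHK, Rmult_comm, <- lsum_scal. apply lsum_ext. intros w _. rewrite weight_add. ring.
Qed.

Section Upper.
Variable d : R. Hypothesis Hd : lsum (fun a => weight (l a) d) A = 1.

Lemma attractor_H_null s : d < s -> H_null s attractor.
Proof.
  intros Hs eps He.
  set (th := lsum (fun a => weight (l a) s) A).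
  assert (Hth : 0 <= th < 1).
  { split; [apply lsum_nonneg; intros; left; apply weight_pos|].
    rewrite <- Hd. apply lsum_lt_some.
    - intros a _. apply weight_le_antimono. lra.
    - destruct exists_in_A as [a Ha]. exists a. split; auto. apply weight_lt_antimono; auto. }
  set (Bp := tail_radius + 1). assert (HBp : 0 < Bp) by (unfold Bp; pose proof tail_radius_ge0; lra).
  set (C := exp (s * ln (2 * Bp))).
  destruct (geometric_eventually_lt th C eps Hth He) as [n Hn]. specialize (Hn n (le_n _)).
  set (Wn := words n).
  set (lo := fun w => c0 + wval w - Bp * (/ Q) ^ (wlen w)).
  set (hi := fun w => c0 + wval w + Bp * (/ Q) ^ (wlen w)).
  exists (fun i => opt_apply lo (nth_error Wn i)), (fun i => opt_apply hi (nth_error Wn i)).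
  split; [|split].
  - intros i. destruct (nth_error Wn i); simpl; [|lra]. unfold lo, hi.
    pose proof (invQ_pow_pos (wlen l0)). nra.
  - intros x [al [Hc Hv]]. assert (Hin : In (prefix al n) Wn).
    { apply In_words. split; [apply prefix_length| apply prefix_over_A; auto]. }
    apply In_nth_error in Hin as [i Hi]. exists i. rewrite Hi. simpl. unfold lo, hi.
    pose proof (expands_near al x n Hc Hv). pose proof (invQ_pow_pos (wlen (prefix al n))).
    apply Rabs_le_inv in H. pose proof tail_radius_ge0. unfold Bp. nra.
  - intros N.
    eapply Rle_lt_trans; [|exact Hn].
    replace (C * th ^ n) with (lsum (fun w => C * weight (wlen w) s) Wn)
      by (rewrite lsum_scal; unfold Wn; rewrite lsum_weight_words; reflexivity).
    eapply Rle_trans; [|apply (sum_nth_error_le_lsum (fun w => C * weight (wlen w) s))].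
    + apply sum_f_R0_le. intros i _. destruct (nth_error Wn i) as [w|]; simpl; [|unfold pw; destruct Rle_dec; lra].
      unfold lo, hi.
      replace (c0 + wval w + Bp * (/ Q) ^ wlen w - (c0 + wval w - Bp * (/ Q) ^ wlen w))
        with (2 * Bp * (/ Q) ^ wlen w) by ring.
      pose proof (invQ_pow_pos (wlen w)).
      pose proof Q_gt1. pose proof invQ_pos.
      rewrite pw_pos by nra. rewrite ln_mult, ln_pow, ln_Rinv by lra.
      unfold C, weight. rewrite <- exp_plus. right. f_equal. ring.
    + intros w _. left. apply Rmult_lt_0_compat; [apply exp_pos| apply weight_pos].
Qed.
End Upper.

Section Konig.
Variable Pn : nat -> list nat -> Prop.

Definition covered_below (w : list nat) (N K : nat) : Prop :=
  forall v, In v (words K) ->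
    exists n, (n <= N)%nat /\ exists j, (j <= length w + K)%nat /\ Pn n (firstn j (w ++ v)).

Lemma covered_below_mono w N K N' K' :
  covered_below w N K -> (N <= N')%nat -> (K <= K')%nat -> covered_below w N' K'.
Proof.
  intros H HN HK v Hv. apply In_words in Hv as [Hv1 Hv2].
  destruct (H (firstn K v)) as [n [Hn [j [Hj HP]]]].
  { apply In_words. split; [rewrite length_firstn; lia|]. intros b hb; apply Hv2; eapply in_firstn; eauto. }
  exists n. split; [lia|]. exists j. split; [lia|].
  replace (firstn j (w ++ v)) with (firstn j (w ++ firstn K v)); auto.
  rewrite !firstn_app, firstn_firstn. f_equal. f_equal. lia.
Qed.

Lemma covered_below_snoc w :
  (forall a, In a A -> exists N K, covered_below (w ++ [a]) N K) -> exists N K, covered_below w N K.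
Proof.
  intros Hall.
  destruct (list_common_bounds (fun a => covered_below (w ++ [a]))) with (L := A) as [N [K HNK]].
  { intros a N K N' K' H HN HK. eapply covered_below_mono; eauto. }
  { exact Hall. }
  exists N, (S K). intros v Hv. apply In_words in Hv as [Hv1 Hv2].
  destruct v as [|a v']; [discriminate|].
  assert (Ha : In a A) by (apply Hv2; left; auto).
  destruct (HNK a Ha v') as [n [Hn [j [Hj HP]]]].
  { apply In_words. split; [simpl in Hv1; lia|]. intros b hb; apply Hv2; right; auto. }
  exists n. split; auto. exists j. split.
  - rewrite length_app in Hj. simpl in Hj. lia.
  - rewrite <- app_assoc in HP. exact HP.
Qed.

(* If the root were not covered below, some letter would always extend an uncovered word,
   producing an infinite branch none of whose prefixes satisfies any Pn n. *)
Lemma konig_cover :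
  (forall al, admissible al -> exists n j, Pn n (prefix al j)) ->
  exists N K, forall v, In v (words K) ->
    exists n, (n <= N)%nat /\ exists j, (j <= K)%nat /\ Pn n (firstn j v).
Proof.
  intros Hcov.
  assert (Hroot : exists N K, covered_below nil N K).
  { apply NNPP. intros Hng.
    destruct (build_branch (fun w => ~ exists N K, covered_below w N K)) as [al [Hc Hal]]; auto.
    { intros w Hw. apply NNPP. intros Hn. apply Hw. apply covered_below_snoc. intros a Ha.
      apply NNPP. intros Hn2. apply Hn. exists a. split; auto. }
    destruct (Hcov al Hc) as [n [j HP]].
    apply (Hal j). exists n, 0%nat. intros v Hv. apply In_words in Hv as [Hv1 _].
    destruct v; [|discriminate]. exists n. split; auto. exists j. split.
    - rewrite prefix_length. lia.
    - rewrite app_nil_r, firstn_all2; auto. rewrite prefix_length. lia. }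
  destruct Hroot as [N [K H]]. exists N, K. exact H.
Qed.

End Konig.

Section Lower.
Variable d : R. Hypothesis Hd : lsum (fun a => weight (l a) d) A = 1. Hypothesis Hdpos : 0 < d.

Definition mu (w : list nat) : R := weight (wlen w) d.

Lemma lsum_mu_words K : lsum mu (words K) = 1.
Proof. unfold mu. rewrite lsum_weight_words, Hd. apply pow1. Qed.

Lemma lsum_mu_firstn j : forall K (h : list nat -> R), (j <= K)%nat ->
  lsum (fun v => mu v * h (firstn j v)) (words K) = lsum (fun w => mu w * h w) (words j).
Proof.
  induction j; intros K h Hj.
  - simpl. unfold mu at 2. simpl. rewrite weight_0.
    transitivity (h nil * lsum mu (words K)); [rewrite <- lsum_scal; apply lsum_ext; intros; ring|].
    rewrite lsum_mu_words. ring.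
  - destruct K as [|K]; [lia|]. simpl. rewrite !lsum_flat_map. apply lsum_ext. intros a Ha.
    rewrite !lsum_map. unfold mu. cbn [wlen firstn].
    transitivity (weight (l a) d * lsum (fun v => mu v * h (a :: firstn j v)) (words K)).
    { rewrite <- lsum_scal. apply lsum_ext. intros v _. unfold mu. rewrite weight_add. ring. }
    rewrite (IHj K (fun w => h (a :: w))) by lia.
    rewrite <- lsum_scal. apply lsum_ext. intros v _. unfold mu. rewrite weight_add. ring.
Qed.

Lemma mass_distribution (Pn : nat -> list nat -> Prop) N K :
  (forall v, In v (words K) -> exists n, (n <= N)%nat /\ exists j, (j <= K)%nat /\ Pn n (firstn j v)) ->
  1 <= sum_f_R0 (fun n => sum_f_R0 (fun j => lsum (fun w => mu w * indicator (Pn n w)) (words j)) K) N.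
Proof.
  intros H. rewrite <- (lsum_mu_words K) at 1.
  eapply Rle_trans.
  { apply (lsum_le mu (fun v => mu v * sum_f_R0 (fun n => sum_f_R0 (fun j => indicator (Pn n (firstn j v))) K) N)).
    intros v Hv. destruct (H v Hv) as [n [Hn [j [Hj HP]]]].
    assert (1 <= sum_f_R0 (fun n => sum_f_R0 (fun j => indicator (Pn n (firstn j v))) K) N).
    { eapply Rle_trans; [|apply (sum_f_R0_ge_term _ N n); auto].
      - eapply Rle_trans; [|apply (sum_f_R0_ge_term _ K j); auto].
        + cbv beta. rewrite indicator_true; auto. lra.
        + intros; apply indicator_ge0.
      - intros m. apply sum_f_R0_nonneg. intros; apply indicator_ge0. }
    assert (0 <= mu v) by (left; apply weight_pos). nra. }
  right.
  transitivity (lsum (fun v => sum_f_R0 (fun n => sum_f_R0 (fun j => mu v * indicator (Pn n (firstn j v))) K) N) (words K)).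
  { apply lsum_ext. intros v _. rewrite scal_sum. apply sum_eq. intros n _.
    rewrite Rmult_comm, scal_sum. apply sum_eq. intros; ring. }
  rewrite lsum_sum_f_R0. apply sum_eq. intros n _. rewrite lsum_sum_f_R0. apply sum_eq. intros j Hj.
  apply (lsum_mu_firstn j K (fun w => indicator (Pn n w))). auto.
Qed.
Lemma NoDup_flat_map_words m n : NoDup (flat_map words (seq m n)).
Proof.
  revert m. induction n; intros m; simpl; [constructor|].
  apply NoDup_app; [apply NoDup_words| apply IHn|].
  intros v hv hv'. apply In_words in hv as [h1 _]. apply in_flat_map in hv' as [j [hj hv']].
  apply In_words in hv' as [h2 _]. apply in_seq in hj. lia.
Qed.

Lemma sum_lsum_words (F : list nat -> R) K :
  sum_f_R0 (fun j => lsum F (words j)) K = lsum F (flat_map words (seq 0 (S K))).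
Proof. rewrite sum_f_R0_lsum_seq, lsum_flat_map. reflexivity. Qed.

Definition near_interval (k : nat) (aJ bJ : R) (w : list nat) : Prop :=
  (k <= wlen w <= k + Rm)%nat /\ exists y, cylinder w y /\ aJ <= y <= bJ.

(* At each of the Rm + 1 lengths k + t, at most 2 K0 + 1 words have a cylinder meeting [aJ, bJ]. *)
Lemma mass_near_interval (aJ bJ : R) (k K0 K : nat) :
  (forall t, (t <= Rm)%nat -> (bJ - aJ) * Q ^ (k + t) + 2 * tail_radius <= INR K0) ->
  sum_f_R0 (fun j => lsum (fun w => mu w * indicator (near_interval k aJ bJ w)) (words j)) K
    <= weight k d * (INR (S Rm) * INR (2 * K0 + 1)).
Proof.
  intros HK. rewrite sum_lsum_words. set (WW := flat_map words (seq 0 (S K))).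
  set (Pn := near_interval k aJ bJ).
  set (Pt := fun t w => wlen w = (k + t)%nat /\ exists y, cylinder w y /\ aJ <= y <= bJ).
  eapply Rle_trans; [apply (lsum_le _ (fun w => weight k d * indicator (Pn w)))|].
  { intros w _. destruct (classic (Pn w)) as [h|h].
    - rewrite !indicator_true by exact h. rewrite !Rmult_1_r. unfold mu.
      apply weight_le_length; [lra| destruct h; lia].
    - rewrite !indicator_false by exact h. lra. }
  rewrite lsum_scal. apply Rmult_le_compat_l; [left; apply weight_pos|].
  eapply Rle_trans; [apply (lsum_le _ (fun w => sum_f_R0 (fun t => indicator (Pt t w)) Rm))|].
  { intros w _. destruct (classic (Pn w)) as [h|h].
    - rewrite indicator_true by auto. destruct h as [h1 h2].
      eapply Rle_trans; [|apply (sum_f_R0_ge_term _ Rm (wlen w - k)); [intros; apply indicator_ge0|lia]].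
      cbv beta. rewrite indicator_true; [lra|]. unfold Pt. split; auto. lia.
    - rewrite indicator_false by auto. apply sum_f_R0_nonneg. intros; apply indicator_ge0. }
  rewrite lsum_sum_f_R0.
  replace (INR (S Rm) * INR (2 * K0 + 1)) with (sum_f_R0 (fun _ => INR (2 * K0 + 1)) Rm)
    by apply sum_f_R0_const.
  apply sum_f_R0_le. intros t Ht.
  destruct (lsum_indicator (Pt t) WW) as [l' [H1 [H2 [H3 H4]]]].
  rewrite H4. apply le_INR. apply (cylinders_meeting_interval l' (k + t) aJ bJ K0); auto.
  apply H3. apply NoDup_flat_map_words.
Qed.

Lemma mass_near_scaled_interval (K0 : nat) (aJ bJ L : R) (k K : nat) :
  Q ^ S Rm + 2 * tail_radius <= INR K0 ->
  0 <= bJ - aJ <= L -> (/ Q) ^ k <= L -> L * Q ^ k <= Q ->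
  sum_f_R0 (fun j => lsum (fun w => mu w * indicator (near_interval k aJ bJ w)) (words j)) K
    <= INR (S Rm) * INR (2 * K0 + 1) * exp (d * ln L).
Proof.
  intros HK0 HL Hk1 Hk2. pose proof Q_gt1.
  assert (HQk : 0 < Q ^ k) by (apply pow_lt; lra).
  assert (HQR : 0 < Q ^ Rm) by (apply pow_lt; lra).
  assert (HC0 : 0 <= INR (S Rm) * INR (2 * K0 + 1)) by (apply Rmult_le_pos; apply pos_INR).
  eapply Rle_trans; [apply (mass_near_interval aJ bJ k K0 K)|].
  - intros t Ht.
    assert (Q ^ t <= Q ^ Rm) by (apply Rle_pow; [lra| auto]).
    assert (0 < Q ^ t) by (apply pow_lt; lra).
    rewrite pow_add.
    assert ((bJ - aJ) * (Q ^ k * Q ^ t) <= L * Q ^ k * Q ^ Rm).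
    { replace ((bJ - aJ) * (Q ^ k * Q ^ t)) with (((bJ - aJ) * Q ^ k) * Q ^ t) by ring.
      apply Rmult_le_compat; nra. }
    assert (L * Q ^ k * Q ^ Rm <= Q ^ S Rm) by (simpl; nra).
    lra.
  - rewrite Rmult_comm. apply Rmult_le_compat_l; auto.
    unfold weight. apply exp_le_mono.
    assert (ln ((/ Q) ^ k) <= ln L) by (apply ln_le_mono; auto; apply invQ_pow_pos).
    rewrite ln_pow, ln_Rinv in H0 by (try apply invQ_pos; lra). nra.
Qed.

Lemma prefix_wlen_window al :
  admissible al -> forall k, exists j, (k <= wlen (prefix al j) <= k + Rm)%nat.
Proof.
  intros Hc k.
  assert (H : forall m, (k <= wlen (prefix al m))%nat -> exists j, (k <= wlen (prefix al j) <= k + Rm)%nat).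
  { induction m; intros Hm.
    - exists 0%nat. simpl in *. lia.
    - destruct (le_lt_dec k (wlen (prefix al m))) as [h|h]; auto.
      exists (S m). rewrite prefix_S, wlen_app in *. cbn [wlen] in *.
      assert (l (al (S m)) <= Rm)%nat by (apply l_le, Hc; lia). lia. }
  apply (H k). apply wlen_prefix_ge; auto.
Qed.

Lemma scale_exists x : 0 < x <= 1 -> exists k, (/ Q) ^ k <= x /\ x * Q ^ k <= Q.
Proof.
  intros Hx.
  destruct (geometric_eventually_lt (/ Q) 1 x) as [k0 Hk0]; [split; [left; apply invQ_pos|apply invQ_lt1]|lra|].
  specialize (Hk0 k0 (le_n _)).
  assert (H : forall k, (/ Q) ^ k <= x -> exists k', (/ Q) ^ k' <= x /\ (k' = 0%nat \/ x < (/ Q) ^ (pred k'))).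
  { induction k; intros Hk.
    - exists 0%nat. auto.
    - destruct (Rle_dec ((/ Q) ^ k) x) as [h|h]; auto.
      exists (S k). split; auto. right. simpl. lra. }
  destruct (H k0) as [k [Hk1 Hk2]]; [lra|].
  exists k. split; auto. pose proof Q_gt1.
  destruct Hk2 as [->|Hk2].
  - simpl. lra.
  - destruct k as [|k]; simpl pred in Hk2.
    + simpl. lra.
    + assert (E : (/ Q) ^ k * Q ^ k = 1) by (rewrite <- Rpow_mult_distr, Rinv_l; [apply pow1|lra]).
      assert (0 < Q ^ k) by (apply pow_lt; lra).
      simpl. apply (Rmult_lt_compat_r (Q ^ k)) in Hk2; auto. rewrite E in Hk2.
      assert (x * (Q * Q ^ k) = Q * (x * Q ^ k)) by ring. nra.
Qed.

Lemma mass_near_fattened_interval (K0 : nat) (aJ bJ eta : R) (k K : nat) :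
  Q ^ S Rm + 2 * tail_radius <= INR K0 -> 0 <= bJ - aJ -> 0 < eta ->
  (/ Q) ^ k <= Rmax (bJ - aJ) eta -> Rmax (bJ - aJ) eta * Q ^ k <= Q ->
  sum_f_R0 (fun j => lsum (fun w => mu w * indicator (near_interval k aJ bJ w)) (words j)) K
    <= INR (S Rm) * INR (2 * K0 + 1) * (pw (bJ - aJ) d + exp (d * ln eta)).
Proof.
  intros HK0 Hab Heta Hk1 Hk2.
  eapply Rle_trans; [apply (mass_near_scaled_interval K0 aJ bJ (Rmax (bJ - aJ) eta)); auto|].
  - split; [lra| apply Rmax_l].
  - apply Rmult_le_compat_l; [apply Rmult_le_pos; apply pos_INR|].
    pose proof (pw_ge0 (bJ - aJ) d). pose proof (exp_pos (d * ln eta)).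
    unfold Rmax. destruct (Rle_dec (bJ - aJ) eta) as [h|h]; [lra|].
    rewrite <- pw_pos by lra. lra.
Qed.

Lemma scale_fun_exists (L : nat -> R) : (forall n, 0 < L n <= 1) ->
  exists kf : nat -> nat, forall n, (/ Q) ^ (kf n) <= L n /\ L n * Q ^ (kf n) <= Q.
Proof.
  intros HL.
  assert (Hk : forall n, exists k, (/ Q) ^ k <= L n /\ L n * Q ^ k <= Q)
    by (intros; apply scale_exists; auto).
  exists (fun n => proj1_sig (constructive_indefinite_description _ (Hk n))).
  intros n. destruct constructive_indefinite_description; simpl; auto.
Qed.

Definition dth_root (m : R) : R := exp (ln m / d).

Lemma dth_root_spec m : 0 < m <= 1 -> 0 < dth_root m <= 1 /\ exp (d * ln (dth_root m)) = m.
Proof.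
  intros Hm. unfold dth_root. rewrite ln_exp. split; [split; [apply exp_pos|]|].
  - rewrite <- exp_0. apply exp_le_mono. assert (ln m <= 0) by (rewrite <- ln_1; apply ln_le_mono; lra).
    unfold Rdiv. assert (0 < / d) by (apply Rinv_0_lt_compat; lra). nra.
  - replace (d * (ln m / d)) with (ln m) by (field; lra). apply exp_ln. lra.
Qed.

(* Mass distribution principle.  Each interval of the cover is fattened to length
   L >= eta n, with the eta n chosen so that the added d-dimensional mass is summable. *)
Lemma attractor_content_lower_bound : exists c, 0 < c /\ forall a b : nat -> R,
  (forall n, a n <= b n <= a n + 1) -> (forall x, attractor x -> exists n, a n <= x <= b n) ->
  exists N, c <= sum_f_R0 (fun n => pw (b n - a n) d) N.
Proof.
  destruct (INR_unbounded_le (Q ^ (S Rm) + 2 * tail_radius)) as [K0 HK0].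
  set (C0 := INR (S Rm) * INR (2 * K0 + 1)).
  assert (HC0 : 1 <= C0).
  { unfold C0. assert (1 <= INR (S Rm)) by (apply (le_INR 1); lia).
    assert (1 <= INR (2 * K0 + 1)) by (apply (le_INR 1); lia). nra. }
  set (e0 := / (2 * C0)). assert (HCe : C0 * e0 = / 2) by (unfold e0; field; lra).
  assert (He0 : 0 < e0 <= / 2).
  { unfold e0. split; [apply Rinv_0_lt_compat; lra|]. apply Rinv_le_contravar; lra. }
  exists e0. split; [lra|]. intros a b Hab Hcov.
  set (eta := fun n : nat => dth_root (e0 * (/ 2) ^ (S n))).
  assert (Heta : forall n, 0 < eta n <= 1 /\ exp (d * ln (eta n)) = e0 * (/ 2) ^ (S n)).
  { intros n. apply dth_root_spec. pose proof (pow_le_one (/ 2) (S n)). pose proof (pow_lt (/ 2) (S n)).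
    split; [apply Rmult_lt_0_compat|]; nra. }
  destruct (scale_fun_exists (fun n => Rmax (b n - a n) (eta n))) as [kf Hkf].
  { intros n. specialize (Hab n). specialize (Heta n). split.
    - eapply Rlt_le_trans; [|apply Rmax_r]. lra.
    - apply Rmax_lub; lra. }
  set (Pn := fun n => near_interval (kf n) (a n) (b n)).
  destruct (konig_cover Pn) as [N [K HNK]].
  { intros al Hc. destruct (expands_exists al Hc) as [x Hx].
    destruct (Hcov x (ex_intro _ al (conj Hc Hx))) as [n Hn].
    destruct (prefix_wlen_window al Hc (kf n)) as [j Hj]. exists n, j. split; auto.
    exists x. split; auto. exists al. rewrite prefix_length. auto. }
  assert (Hn : forall n, sum_f_R0 (fun j => lsum (fun w => mu w * indicator (Pn n w)) (words j)) K
                 <= C0 * pw (b n - a n) d + / 2 * (/ 2) ^ (S n)).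
  { intros n. specialize (Hab n). destruct (Heta n) as [Hn1 Hn2]. destruct (Hkf n).
    replace (C0 * pw (b n - a n) d + / 2 * (/ 2) ^ S n)
      with (C0 * (pw (b n - a n) d + exp (d * ln (eta n)))) by (rewrite Hn2, <- HCe; ring).
    apply mass_near_fattened_interval; auto; lra. }
  exists N. apply sum_absorb_half_geometric; [lra|].
  eapply Rle_trans; [apply (mass_distribution Pn N K HNK)|]. apply sum_f_R0_le. intros n _. apply Hn.
Qed.

Lemma attractor_H_infinite s : 0 < s < d -> H_infinite s attractor.
Proof.
  intros Hs. destruct attractor_content_lower_bound as [c [Hc Hcont]].
  apply (H_infinite_of_content _ s d c); auto.
Qed.

End Lower.

Lemma attractor_nonempty : exists x, attractor x.
Proof.
  destruct exists_in_A as [a0 Ha0].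
  assert (Hc : admissible (fun _ => a0)) by (intros n _; auto).
  destruct (expands_exists _ Hc) as [x Hx]. exists x, (fun _ => a0). auto.
Qed.

Lemma attractor_bounded x : attractor x -> Rabs x <= Rabs c0 + tail_radius.
Proof.
  intros [al [Hc Hv]]. pose proof (expands_near al x 0 Hc Hv). simpl in H.
  replace (x - c0 - 0) with (x - c0) in H by ring. rewrite Rmult_1_r in H.
  pose proof (Rabs_triang (x - c0) c0). replace (x - c0 + c0) with x in H0 by ring. lra.
Qed.

Lemma attractor_self_similar : self_similar attractor.
Proof.
  split; [apply attractor_nonempty|]. split; [apply attractor_closed|].
  split; [exists (Rabs c0 + tail_radius); apply attractor_bounded|].
  exists (map (fun a => (ratio ^ (l a), c0 + ratio ^ (l a) * (IZR (g a) - c0))) A). split; [|split].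
  - intros E. apply map_eq_nil in E. contradiction.
  - intros p hp. apply in_map_iff in hp as [a [<- ha]]. simpl. rewrite Rabs_ratio_pow.
    split; [apply invQ_pow_pos|]. eapply Rle_lt_trans; [apply (invQ_pow_le 1); apply l_pos; auto|].
    simpl. rewrite Rmult_1_r. apply invQ_lt1.
  - intros x. rewrite attractor_decomp. split.
    + intros [a [y [ha [hy ->]]]]. exists (ratio ^ (l a), c0 + ratio ^ (l a) * (IZR (g a) - c0)), y.
      split; [apply in_map_iff; exists a; auto|]. split; auto. simpl. ring.
    + intros [p [y [hp [hy ->]]]]. apply in_map_iff in hp as [a [<- ha]]. exists a, y. split; auto. split; auto.
      simpl. ring.
Qed.

Section Dims.
Variable d : R. Hypothesis Hd : lsum (fun a => weight (l a) d) A = 1. Hypothesis Hdpos : 0 < d.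

Lemma attractor_dim : hausdorff_dim attractor d.
Proof.
  split; [lra|]. split.
  - intros s Hs. apply (attractor_H_null d Hd s Hs).
  - intros s Hs. apply (attractor_H_infinite d Hd Hdpos s Hs).
Qed.

Lemma attractor_uncountable : uncountable attractor.
Proof.
  intros [f Hf]. apply (H_null_H_infinite_absurd (d / 2) attractor); [lra| |].
  - apply (countable_H_null attractor f); auto.
  - apply (attractor_H_infinite d Hd Hdpos). lra.
Qed.

Lemma attractor_two_points : exists y1 y2, attractor y1 /\ attractor y2 /\ y1 <> y2.
Proof.
  destruct attractor_nonempty as [x0 Hx0].
  apply NNPP. intros Hn. apply attractor_uncountable. exists (fun _ => x0). intros x Hx. exists 0%nat.
  apply NNPP. intros Hne. apply Hn. exists x0, x. auto.
Qed.

Lemma cylinder_two_points w : over_A w -> exists z1 z2, cylinder w z1 /\ cylinder w z2 /\ z1 <> z2.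
Proof.
  intros Hw.
  destruct attractor_two_points as [y1 [y2 [[b1 [Hb1 Hv1]] [[b2 [Hb2 Hv2]] Hne]]]].
  destruct (expands_prepend w b1 y1 Hw Hb1 Hv1) as [a1 [Ha1 [Hp1 Hva1]]].
  destruct (expands_prepend w b2 y2 Hw Hb2 Hv2) as [a2 [Ha2 [Hp2 Hva2]]].
  eexists; eexists. split; [exists a1; eauto|]. split; [exists a2; eauto|].
  intros E. apply Hne.
  assert (ratio ^ wlen w <> 0) by (apply pow_nonzero; unfold ratio; pose proof invQ_pos; lra).
  apply (Rmult_eq_reg_l (ratio ^ wlen w)); auto. lra.
Qed.

Lemma cylinder_dist w y z :
  cylinder w y -> cylinder w z -> Rabs (y - z) <= 2 * tail_radius * (/ Q) ^ wlen w.
Proof.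
  intros Hy Hz. pose proof (cylinder_near w y Hy). pose proof (cylinder_near w z Hz).
  replace (y - z) with ((y - c0 - wval w) - (z - c0 - wval w)) by ring.
  eapply Rle_trans; [apply Rabs_triang|]. rewrite Rabs_Ropp. lra.
Qed.

Lemma attractor_perfect : perfect attractor.
Proof.
  split; [apply attractor_closed|].
  intros x [al [Hc Hv]] eps He.
  destruct (geometric_eventually_lt (/ Q) (2 * tail_radius) eps) as [j Hj]; auto.
  { split; [left; apply invQ_pos| apply invQ_lt1]. }
  specialize (Hj j (le_n _)).
  assert (Hx : cylinder (prefix al j) x) by (exists al; rewrite prefix_length; auto).
  destruct (cylinder_two_points (prefix al j)) as [z1 [z2 [Hz1 [Hz2 Hne]]]]; [apply prefix_over_A; auto|].
  assert (Hnear : forall z, cylinder (prefix al j) z -> Rabs (z - x) < eps).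
  { intros z Hz. pose proof (cylinder_dist _ z x Hz Hx).
    assert ((/ Q) ^ wlen (prefix al j) <= (/ Q) ^ j) by (apply invQ_pow_le, wlen_prefix_ge; auto).
    pose proof tail_radius_ge0. nra. }
  destruct (Req_dec z1 x) as [E1|E1].
  - exists z2. split; [destruct Hz2 as [b [? [? ?]]]; exists b; auto|]. split; [congruence| auto].
  - exists z1. split; [destruct Hz1 as [b [? [? ?]]]; exists b; auto|]. split; auto.
Qed.

Hypothesis Hd1 : d < 1.

Lemma attractor_leb_null : leb_null attractor.
Proof. apply H_null_1_leb_null. apply (attractor_H_null d Hd). auto. Qed.

Lemma attractor_nowhere_dense : nowhere_dense attractor.
Proof. apply closed_leb_null_nowhere_dense; [apply attractor_closed| apply attractor_leb_null]. Qed.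
End Dims.

End Attractor.

(** * D(h) and E(h) as attractors *)

Lemma Z_eq0_of_small_multiple (n k x : Z) : (Z.abs x < n)%Z -> x = (n * k)%Z -> x = 0%Z.
Proof.
  intros Hx ->. destruct (Z.eq_dec k 0) as [->|hk]; [lia|].
  assert (n <= Z.abs (n * k))%Z by (rewrite Z.abs_mul; nia). lia.
Qed.

Section Theta.
Variable q u : nat. Hypothesis hq : (3 < q)%nat. Hypothesis hu : (u < q)%nat.

Definition Theta := filter (fun p => negb (Nat.eqb p u)) (seq 1 (q - 1)).

Lemma q_ge2 : (2 <= q)%nat. Proof. lia. Qed.

Lemma In_Theta p : In p Theta <-> in_Theta q u p.
Proof.
  unfold Theta, in_Theta. rewrite filter_In, in_seq. split.
  - intros [h1 h2]. apply Bool.negb_true_iff, Nat.eqb_neq in h2. lia.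
  - intros [h1 h2]. split; [lia|]. apply Bool.negb_true_iff, Nat.eqb_neq. auto.
Qed.

Lemma Theta_bounds p : In p Theta -> (1 <= p <= q - 1)%nat.
Proof. intros H. apply In_Theta in H as [h _]. auto. Qed.

Lemma NoDup_Theta : NoDup Theta.
Proof. apply NoDup_filter, seq_NoDup. Qed.

Lemma Theta_two : exists p1 p2, In p1 Theta /\ In p2 Theta /\ p1 <> p2 /\ (2 <= p2)%nat.
Proof.
  assert (HI : forall p, (1 <= p <= q - 1)%nat -> p <> u -> In p Theta)
    by (intros; apply In_Theta; split; auto).
  destruct (Nat.eq_dec u 1) as [E|h1]; [|destruct (Nat.eq_dec u 2) as [E|h2]].
  - exists 2%nat, 3%nat. repeat split; try apply HI; lia.
  - exists 1%nat, 3%nat. repeat split; try apply HI; lia.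
  - exists 1%nat, 2%nat. repeat split; try apply HI; lia.
Qed.

Lemma Theta_neq_nil : Theta <> nil.
Proof. destruct Theta_two as [p1 [p2 [h _]]]. intros E. rewrite E in h. contradiction. Qed.

Lemma Theta_length_ge2 : (2 <= length Theta)%nat.
Proof.
  destruct Theta_two as [p1 [p2 [h1 [h2 [h3 _]]]]].
  destruct Theta as [|a [|b L]]; simpl; try lia.
  - contradiction.
  - destruct h1 as [<-|[]]. destruct h2 as [<-|[]]. congruence.
Qed.

Lemma Theta_length_lt : (length Theta <= q - 1)%nat.
Proof. unfold Theta. rewrite <- (length_seq (q - 1) 1) at 2. apply filter_length_le. Qed.

Lemma admissible_Theta al : admissible Theta al <-> Theta_seq q u al.
Proof. unfold admissible, Theta_seq. split; intros H n Hn; apply In_Theta; apply H; auto. Qed.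

Lemma ratio_pow_div k x : ratio q ^ k * x = x / (- INR q) ^ k.
Proof. unfold ratio, Q. rewrite <- Rinv_opp, pow_inv. unfold Rdiv. ring. Qed.

Lemma invQ_bounds : 0 <= / Q q < 1.
Proof. split; [left; apply invQ_pos, q_ge2| apply invQ_lt1, q_ge2]. Qed.

Definition lenE (p : nat) : nat := 1.
Definition digE (p : nat) : Z := Z.of_nat p.

Lemma digE_incongruent a a' k :
  In a Theta -> In a' Theta -> (digE a - digE a' = Z.of_nat q * k)%Z -> a = a'.
Proof.
  intros Ha Ha' E. apply Theta_bounds in Ha. apply Theta_bounds in Ha'. unfold digE in E.
  apply Z_eq0_of_small_multiple in E; lia.
Qed.

Lemma digE_bound a : In a Theta -> Rabs (IZR (digE a)) <= INR q.
Proof.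
  intros Ha. apply Theta_bounds in Ha. unfold digE.
  rewrite <- INR_IZR_INZ, Rabs_pos_eq by apply pos_INR. apply le_INR. lia.
Qed.

Lemma lenE_ge1 a : In a Theta -> (1 <= lenE a)%nat.
Proof. unfold lenE. lia. Qed.

Lemma lenE_le1 a : In a Theta -> (lenE a <= 1)%nat.
Proof. unfold lenE. lia. Qed.

Lemma wlen_lenE w : wlen lenE w = length w.
Proof. induction w; simpl; auto. Qed.

Lemma wval_E_partial_sum al n :
  wval q lenE digE (prefix al (S n)) = sum_f_R0 (fun k => INR (al (S k)) / (- INR q) ^ (S k)) n.
Proof.
  induction n.
  - unfold prefix. simpl seq. simpl map. cbn [wval sum_f_R0]. unfold lenE, digE.
    rewrite <- INR_IZR_INZ, Rplus_0_r, <- (ratio_pow_div 1 (INR (al 1%nat))). reflexivity.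
  - rewrite prefix_S, wval_snoc, IHn. simpl sum_f_R0. f_equal.
    rewrite wlen_lenE, prefix_length. unfold lenE, digE. rewrite <- INR_IZR_INZ, ratio_pow_div.
    replace (S n + 1)%nat with (S (S n)) by lia. reflexivity.
Qed.

Lemma Eh_attractor : Eh q u = attractor q Theta lenE digE 0.
Proof.
  apply functional_extensionality. intros y. apply propositional_extensionality.
  unfold Eh, attractor, nega, expands. split; intros [al [Ht Hn]]; exists al;
    (split; [apply admissible_Theta; auto|]).
  - apply Un_cv_shift_iff. intros e He. destruct (Hn e He) as [N HN]. exists N. intros n Hn'.
    rewrite Rplus_0_l, wval_E_partial_sum. apply HN; auto.
  - apply Un_cv_shift_iff in Hn. intros e He. destruct (Hn e He) as [N HN]. exists N. intros n Hn'.
    specialize (HN n Hn'). rewrite Rplus_0_l, wval_E_partial_sum in HN. auto.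
Qed.

Definition lenD (p : nat) : nat := p.
Definition digD (p : nat) : Z := (Z.of_nat p - Z.of_nat u)%Z.

(* The value of the all-u tail: -u/(q+1) = sum_k u/(-q)^k. *)
Definition offsetD := - INR u / (INR q + 1).

Lemma digD_incongruent a a' k :
  In a Theta -> In a' Theta -> (digD a - digD a' = Z.of_nat q * k)%Z -> a = a'.
Proof.
  intros Ha Ha' E. apply Theta_bounds in Ha. apply Theta_bounds in Ha'. unfold digD in E.
  apply Z_eq0_of_small_multiple in E; lia.
Qed.

Lemma digD_bound a : In a Theta -> Rabs (IZR (digD a)) <= INR q.
Proof.
  intros Ha. apply Theta_bounds in Ha. unfold digD. rewrite minus_IZR, <- !INR_IZR_INZ.
  apply Rabs_le. assert (INR a <= INR q) by (apply le_INR; lia).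
  assert (INR u <= INR q) by (apply le_INR; lia). pose proof (pos_INR a). pose proof (pos_INR u). lra.
Qed.

Lemma lenD_ge1 a : In a Theta -> (1 <= lenD a)%nat.
Proof. intros Ha. apply Theta_bounds in Ha. unfold lenD. lia. Qed.

Lemma lenD_le a : In a Theta -> (lenD a <= q)%nat.
Proof. intros Ha. apply Theta_bounds in Ha. unfold lenD. lia. Qed.

Lemma offsetD_fixed : offsetD * (1 - ratio q) = INR u * ratio q.
Proof. unfold offsetD, ratio, Q. assert (0 < INR q) by (apply lt_0_INR; lia). field. lra. Qed.

Lemma wlen_lenD_prefix al n : wlen lenD (prefix al n) = blk_end al n.
Proof. induction n; [reflexivity|]. rewrite prefix_S, (wlen_app q q_ge2), IHn. simpl. unfold lenD. lia. Qed.

Lemma blk_end_S al n : blk_end al (S n) = (blk_end al n + al (S n))%nat.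
Proof. reflexivity. Qed.

Fixpoint nega_partial (be : nat -> nat) (K : nat) : R :=
  match K with O => 0 | S K' => nega_partial be K' + INR (be (S K')) * ratio q ^ (S K') end.

Lemma sum_nega_partial be K :
  sum_f_R0 (fun k => INR (be (S k)) / (- INR q) ^ (S k)) K = nega_partial be (S K).
Proof.
  induction K.
  - change (nega_partial be 1) with (0 + INR (be 1%nat) * ratio q ^ 1). cbn [sum_f_R0].
    rewrite Rplus_0_l, Rmult_comm, ratio_pow_div. reflexivity.
  - cbn [sum_f_R0]. rewrite IHK.
    change (nega_partial be (S (S K))) with (nega_partial be (S K) + INR (be (S (S K))) * ratio q ^ (S (S K))).
    rewrite (Rmult_comm (INR _)), ratio_pow_div. reflexivity.
Qed.

Section Blocks.
Variable al be : nat -> nat.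
Hypothesis Hal : admissible Theta al.
Hypothesis Hcat : is_concat u al be.

Lemma al_ge1 n : (1 <= al (S n))%nat.
Proof. apply Theta_bounds, Hal. lia. Qed.

Lemma blk_end_mono m m' : (m <= m')%nat -> (blk_end al m <= blk_end al m')%nat.
Proof. intros H. induction H; auto. rewrite blk_end_S. lia. Qed.

Lemma blk_end_strict m m' : (m < m')%nat -> (blk_end al m < blk_end al m')%nat.
Proof.
  intros H. pose proof (blk_end_mono (S m) m' H). rewrite blk_end_S in H0.
  pose proof (al_ge1 m). lia.
Qed.

Lemma blk_end_ge n : (n <= blk_end al n)%nat.
Proof. induction n; auto. rewrite blk_end_S. pose proof (al_ge1 n). lia. Qed.

Lemma blk_end_inj m n : blk_end al m = blk_end al n -> m = n.
Proof.
  intros E. destruct (Nat.lt_trichotomy m n) as [h|[h|h]]; auto;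
    apply blk_end_strict in h; lia.
Qed.

Lemma blk_end_decomp K : exists n j, K = (blk_end al n + j)%nat /\ (j < al (S n))%nat.
Proof.
  induction K.
  - exists 0%nat, 0%nat. split; [reflexivity| apply al_ge1].
  - destruct IHK as [n [j [E Hj]]].
    destruct (Nat.eq_dec (S j) (al (S n))) as [h|h].
    + exists (S n), 0%nat. split; [rewrite blk_end_S; lia| apply al_ge1].
    + exists n, (S j). split; lia.
Qed.

Lemma concat_at_blk_end n : (1 <= n)%nat -> be (blk_end al n) = al n.
Proof. intros Hn. apply (Hcat (blk_end al n)); auto. pose proof (blk_end_ge n). lia. Qed.

Lemma concat_inside_block n j : (S j < al (S n))%nat -> be (S (blk_end al n + j)) = u.
Proof.
  intros Hj. apply Hcat; [lia|]. intros m Hm E.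
  destruct (le_lt_dec m n) as [h|h].
  - pose proof (blk_end_mono m n h). lia.
  - pose proof (blk_end_mono (S n) m h). rewrite blk_end_S in H. lia.
Qed.

(* Inside a block the digits u add up to the geometric tail of offsetD; at the end of the
   block the digit al (S n) replaces u, which accounts for digD = al (S n) - u. *)
Lemma nega_partial_in_block n j : (j < al (S n))%nat ->
  nega_partial be (blk_end al n) = offsetD * (1 - ratio q ^ (blk_end al n)) + wval q lenD digD (prefix al n) ->
  nega_partial be (blk_end al n + j) =
    offsetD * (1 - ratio q ^ (blk_end al n + j)) + wval q lenD digD (prefix al n).
Proof.
  intros Hj Hb. induction j.
  - rewrite Nat.add_0_r. auto.
  - replace (blk_end al n + S j)%nat with (S (blk_end al n + j)) by lia. simpl nega_partial.
    rewrite IHj by lia. rewrite concat_inside_block by lia. simpl pow. pose proof offsetD_fixed.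
    transitivity (offsetD - offsetD * ratio q ^ (blk_end al n + j)
                  + ratio q ^ (blk_end al n + j) * (INR u * ratio q) + wval q lenD digD (prefix al n)); [ring|].
    rewrite <- H. ring.
Qed.

Lemma nega_partial_blk_end n :
  nega_partial be (blk_end al n) = offsetD * (1 - ratio q ^ (blk_end al n)) + wval q lenD digD (prefix al n).
Proof.
  induction n.
  - simpl. unfold prefix. simpl. ring.
  - pose proof (al_ge1 n) as Ha.
    rewrite blk_end_S. replace (blk_end al n + al (S n))%nat with (S (blk_end al n + (al (S n) - 1))) by lia.
    simpl nega_partial. rewrite (nega_partial_in_block n) by (auto; lia).
    replace (S (blk_end al n + (al (S n) - 1))) with (blk_end al (S n)) by (rewrite blk_end_S; lia).
    rewrite concat_at_blk_end by lia.
    rewrite prefix_S, wval_snoc, wlen_lenD_prefix.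
    change (lenD (al (S n))) with (al (S n)). change (digD (al (S n))) with (Z.of_nat (al (S n)) - Z.of_nat u)%Z.
    rewrite minus_IZR, <- !INR_IZR_INZ.
    set (K := (blk_end al n + (al (S n) - 1))%nat).
    replace (blk_end al n + al (S n))%nat with (S K) by (unfold K; lia).
    replace (blk_end al (S n)) with (S K) by (unfold K; rewrite blk_end_S; lia).
    simpl pow. pose proof offsetD_fixed.
    assert (E : offsetD * ratio q ^ K * (1 - ratio q) = INR u * ratio q * ratio q ^ K).
    { rewrite Rmult_assoc, (Rmult_comm (ratio q ^ K)), <- Rmult_assoc, H. ring. }
    nra.
Qed.

Lemma nega_partial_near n j : (j < al (S n))%nat ->
  Rabs (nega_partial be (blk_end al n + j) - (offsetD + wval q lenD digD (prefix al n)))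
    <= Rabs offsetD * (/ Q q) ^ (blk_end al n + j).
Proof.
  intros Hj. rewrite (nega_partial_in_block n j Hj (nega_partial_blk_end n)).
  replace (offsetD * (1 - ratio q ^ (blk_end al n + j)) + wval q lenD digD (prefix al n)
           - (offsetD + wval q lenD digD (prefix al n)))
    with (- (offsetD * ratio q ^ (blk_end al n + j))) by ring.
  rewrite Rabs_Ropp, Rabs_mult, (Rabs_ratio_pow q q_ge2). lra.
Qed.

Lemma expands_of_nega x : nega q be x -> expands q lenD digD offsetD al x.
Proof.
  intros Hn e He.
  destruct (Hn (e / 2)) as [N1 HN1]; [lra|].
  destruct (geometric_eventually_lt (/ Q q) (Rabs offsetD) (e / 2) invQ_bounds) as [N2 HN2]; [lra|].
  exists (max (S N1) N2). intros n Hn'.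
  pose proof (blk_end_ge n) as Hge.
  pose proof (nega_partial_near n 0 (al_ge1 n)) as Hnear. rewrite Nat.add_0_r in Hnear.
  destruct (blk_end al n) as [|K] eqn:EK; [lia|].
  specialize (HN1 K ltac:(lia)). rewrite sum_nega_partial in HN1. unfold R_dist in *.
  assert ((/ Q q) ^ S K <= (/ Q q) ^ n) by (apply invQ_pow_le; [apply q_ge2| lia]).
  specialize (HN2 n ltac:(lia)). pose proof (Rabs_pos offsetD).
  replace (offsetD + wval q lenD digD (prefix al n) - x) with
    ((nega_partial be (S K) - x) - (nega_partial be (S K) - (offsetD + wval q lenD digD (prefix al n)))) by ring.
  eapply Rle_lt_trans; [apply Rabs_triang|]. rewrite Rabs_Ropp. nra.
Qed.

Lemma nega_of_expands x : expands q lenD digD offsetD al x -> nega q be x.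
Proof.
  intros Hv e He.
  set (Tc := Rabs offsetD + tail_radius q (INR q)).
  destruct (geometric_eventually_lt (/ Q q) Tc e invQ_bounds He) as [N HN].
  exists (N + q)%nat. intros K HK. unfold R_dist. rewrite sum_nega_partial.
  destruct (blk_end_decomp (S K)) as [n [j [EK Hj]]]. rewrite EK.
  pose proof (nega_partial_near n j Hj) as Hblock.
  pose proof (expands_near q q_ge2 Theta lenD lenD_ge1 digD (INR q) (pos_INR q) digD_bound offsetD
                al x n Hal Hv)
    as Hnear.
  rewrite wlen_lenD_prefix in Hnear.
  assert (Haq : (al (S n) <= q - 1)%nat) by (apply Theta_bounds, Hal; lia).
  assert ((/ Q q) ^ (blk_end al n + j) <= (/ Q q) ^ (S K - q)) by (apply invQ_pow_le; [apply q_ge2| lia]).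
  assert ((/ Q q) ^ (blk_end al n) <= (/ Q q) ^ (S K - q)) by (apply invQ_pow_le; [apply q_ge2| lia]).
  assert ((/ Q q) ^ (S K - q) <= (/ Q q) ^ N) by (apply invQ_pow_le; [apply q_ge2| lia]).
  specialize (HN N (le_n _)).
  assert (0 <= tail_radius q (INR q)) by (apply tail_radius_ge0; [apply q_ge2| apply pos_INR]).
  pose proof (Rabs_pos offsetD). unfold Tc in HN.
  replace (nega_partial be (blk_end al n + j) - x) with
    ((nega_partial be (blk_end al n + j) - (offsetD + wval q lenD digD (prefix al n)))
     - (x - offsetD - wval q lenD digD (prefix al n))) by ring.
  eapply Rle_lt_trans; [apply Rabs_triang|]. rewrite Rabs_Ropp. nra.
Qed.

End Blocks.

Definition concat_digits (al : nat -> nat) (k : nat) : nat :=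
  match find (fun m => Nat.eqb (blk_end al m) k) (seq 1 k) with Some m => al m | None => u end.

Lemma concat_digits_is_concat al : admissible Theta al -> is_concat u al (concat_digits al).
Proof.
  intros Hc k Hk. split.
  - intros n Hn E. subst k. unfold concat_digits. destruct (find _ _) as [m|] eqn:Ef.
    + apply find_some in Ef as [Hm Em]. apply Nat.eqb_eq in Em. f_equal. apply (blk_end_inj al); auto.
    + exfalso. pose proof (find_none _ _ Ef n) as H. cbv beta in H. rewrite Nat.eqb_refl in H.
      assert (In n (seq 1 (blk_end al n))) by (apply in_seq; pose proof (blk_end_ge al Hc n); lia).
      specialize (H H0). discriminate.
  - intros Hn. unfold concat_digits. destruct (find _ _) as [m|] eqn:Ef; auto.
    apply find_some in Ef as [Hm Em]. apply Nat.eqb_eq in Em. apply in_seq in Hm.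
    exfalso. apply (Hn m); [lia| auto].
Qed.

Lemma Dh_attractor : Dh q u = attractor q Theta lenD digD offsetD.
Proof.
  apply functional_extensionality. intros x. apply propositional_extensionality.
  unfold Dh, attractor. split.
  - intros [al [be [Hts [Hcat Hn]]]]. apply admissible_Theta in Hts.
    exists al. split; auto. apply (expands_of_nega al be); auto.
  - intros [al [Hc Hv]]. exists al, (concat_digits al).
    pose proof (concat_digits_is_concat al Hc).
    split; [apply admissible_Theta; auto|]. split; auto. apply (nega_of_expands al); auto.
Qed.

(** * The two dimensions *)

Definition dim_fun (a : R) : R := lsum (fun p => weight q (lenD p) a) Theta.

Lemma dim_eq_dim_fun a : dim_eq q u a <-> dim_fun a = 1.
Proof.
  unfold dim_eq, sum_f. rewrite sum_f_R0_lsum_seq.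
  replace (S (q - 1 - 1)) with (q - 1)%nat by lia.
  rewrite <- (lsum_map (fun p => if (p =? u)%nat then 0 else Rpower (1 / INR q) (INR p * a)) (fun x => (x + 1)%nat)).
  replace (map (fun x => (x + 1)%nat) (seq 0 (q - 1))) with (seq 1 (q - 1)).
  2:{ rewrite <- seq_shift. apply map_ext. intros; lia. }
  rewrite lsum_if_filter. fold Theta.
  replace (lsum (fun p => Rpower (1 / INR q) (INR p * a)) Theta) with (dim_fun a); [tauto|].
  apply lsum_ext. intros p _. unfold Rpower, weight, lenD, Q. unfold Rdiv. rewrite Rmult_1_l, ln_Rinv.
  - f_equal. ring.
  - apply lt_0_INR. lia.
Qed.

Lemma dim_fun_continuity : continuity dim_fun.
Proof.
  unfold dim_fun. induction Theta as [|p L IH]; simpl.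
  - apply continuity_const. intros x y. reflexivity.
  - apply (continuity_plus (fun a => weight q (lenD p) a)); auto. unfold weight. reg.
Qed.

Lemma dim_fun_antimono a b : a <= b -> dim_fun b <= dim_fun a.
Proof. intros H. apply lsum_le. intros p _. apply weight_le_antimono; auto. apply q_ge2. Qed.

Lemma dim_fun_0 : dim_fun 0 = INR (length Theta).
Proof.
  unfold dim_fun. rewrite <- lsum_const_1. apply lsum_ext. intros p _.
  unfold weight. rewrite Rmult_0_r, Rmult_0_l. apply exp_0.
Qed.

Lemma dim_fun_1 : dim_fun 1 <= / 3.
Proof.
  assert (HQ : 4 <= Q q) by (unfold Q; apply (le_INR 4) in hq; simpl in hq; lra).
  pose proof invQ_bounds.
  unfold dim_fun. transitivity (lsum (fun p => (/ Q q) ^ p) Theta).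
  { right. apply lsum_ext. intros p _. unfold weight, lenD.
    rewrite <- (exp_ln ((/ Q q) ^ p)) by (apply pow_lt, invQ_pos, q_ge2). f_equal.
    rewrite ln_pow, ln_Rinv by (try apply invQ_pos, q_ge2; lra). ring. }
  unfold Theta. eapply Rle_trans; [apply lsum_filter_le; intros; apply pow_le; lra|].
  eapply Rle_trans; [apply lsum_seq_pow_le; auto|]. simpl. rewrite Rmult_1_r.
  apply (Rmult_le_reg_r (1 - / Q q)); [lra|]. unfold Rdiv. rewrite Rmult_assoc, Rinv_l by lra.
  assert (/ Q q <= / 4) by (apply Rinv_le_contravar; lra). lra.
Qed.

Lemma dim_eq_solvable : exists a0, dim_eq q u a0.
Proof.
  destruct (IVT (fun a => 1 - dim_fun a) 0 1) as [z [Hz1 Hz2]].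
  - apply (continuity_minus (fun _ => 1) dim_fun); [apply continuity_const; intros x y; reflexivity|].
    apply dim_fun_continuity.
  - lra.
  - rewrite dim_fun_0. pose proof Theta_length_ge2. apply (le_INR 2) in H. simpl in H. lra.
  - pose proof dim_fun_1. lra.
  - exists z. apply dim_eq_dim_fun. lra.
Qed.

Lemma dim_eq_root_bounds a0 : dim_fun a0 = 1 -> 0 < a0 < 1.
Proof.
  intros H. split.
  - apply Rnot_le_lt. intros Hle. pose proof (dim_fun_antimono a0 0 Hle). rewrite dim_fun_0 in H0.
    pose proof Theta_length_ge2. apply (le_INR 2) in H1. simpl in H1. lra.
  - apply Rnot_le_lt. intros Hle. pose proof (dim_fun_antimono 1 a0 Hle). pose proof dim_fun_1. lra.
Qed.

Definition dimE := ln (INR (length Theta)) / ln (INR q).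

Lemma card_Theta_bounds : 2 <= INR (length Theta) < INR q.
Proof.
  split.
  - pose proof Theta_length_ge2. apply (le_INR 2) in H. simpl in H. lra.
  - apply lt_INR. pose proof Theta_length_lt. lia.
Qed.

Lemma dimE_bounds : 0 < dimE < 1.
Proof.
  pose proof card_Theta_bounds. assert (0 < ln (INR (length Theta))) by (rewrite <- ln_1; apply ln_increasing; lra).
  assert (ln (INR (length Theta)) < ln (INR q)) by (apply ln_increasing; lra). unfold dimE. split.
  - apply Rdiv_lt_0_compat; lra.
  - apply (Rmult_lt_reg_r (ln (INR q))); [lra|]. unfold Rdiv. rewrite Rmult_assoc, Rinv_l by lra. lra.
Qed.

Lemma lenE_weight : lsum (fun a => weight q (lenE a) dimE) Theta = 1.
Proof.
  pose proof card_Theta_bounds. assert (0 < ln (INR (length Theta))) by (rewrite <- ln_1; apply ln_increasing; lra).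
  assert (0 < ln (INR q)) by (rewrite <- ln_1; apply ln_increasing; lra).
  assert (Hw : weight q 1 dimE = / INR (length Theta)).
  { unfold weight, dimE, Q.
    match goal with |- exp ?e = _ => replace e with (- ln (INR (length Theta))) by (simpl INR; field; lra) end.
    rewrite exp_Ropp, exp_ln by lra. reflexivity. }
  transitivity (/ INR (length Theta) * lsum (fun _ => 1) Theta).
  - rewrite <- lsum_scal. apply lsum_ext. intros. unfold lenE. rewrite Hw. ring.
  - rewrite lsum_const_1. field. lra.
Qed.

(* The letter of length >= 2 makes the weights of D strictly smaller than those of E. *)
Lemma dim_eq_root_lt_dimE a0 : dim_fun a0 = 1 -> a0 < dimE.
Proof.
  intros H. pose proof dimE_bounds.
  assert (HF : dim_fun dimE < 1).
  { rewrite <- lenE_weight. apply lsum_lt_some.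
    - intros p Hp. apply Theta_bounds in Hp. apply (weight_le_length q q_ge2); [lra| unfold lenE, lenD; lia].
    - destruct Theta_two as [p1 [p2 [_ [Hp2 [_ H2]]]]]. exists p2. split; auto.
      apply (weight_lt_length q q_ge2); [lra| unfold lenE, lenD; lia]. }
  apply Rnot_le_lt. intros Hle. pose proof (dim_fun_antimono dimE a0 Hle). lra.
Qed.

Section RootOfDimEq.
Variable a0 : R. Hypothesis Ha0 : dim_eq q u a0.

Lemma dim_fun_a0 : dim_fun a0 = 1 /\ 0 < a0 < 1.
Proof. apply dim_eq_dim_fun in Ha0. split; auto. apply dim_eq_root_bounds; auto. Qed.

Lemma Dh_hausdorff_dim : hausdorff_dim (Dh q u) a0.
Proof.
  destruct dim_fun_a0. rewrite Dh_attractor.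
  apply (attractor_dim q q_ge2 Theta NoDup_Theta Theta_neq_nil lenD lenD_ge1 q lenD_le digD digD_incongruent
    (INR q) (pos_INR q) digD_bound offsetD a0); auto; lra.
Qed.

Lemma Dh_uncountable : uncountable (Dh q u).
Proof.
  destruct dim_fun_a0. rewrite Dh_attractor.
  apply (attractor_uncountable q q_ge2 Theta NoDup_Theta lenD lenD_ge1 q lenD_le digD digD_incongruent
    (INR q) (pos_INR q) digD_bound offsetD a0); auto; lra.
Qed.

Lemma Dh_perfect : perfect (Dh q u).
Proof.
  destruct dim_fun_a0. rewrite Dh_attractor.
  apply (attractor_perfect q q_ge2 Theta NoDup_Theta Theta_neq_nil lenD lenD_ge1 q lenD_le digD digD_incongruent
    (INR q) (pos_INR q) digD_bound offsetD a0); auto; lra.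
Qed.

Lemma Dh_leb_null : leb_null (Dh q u).
Proof.
  destruct dim_fun_a0. rewrite Dh_attractor.
  apply (attractor_leb_null q q_ge2 Theta Theta_neq_nil lenD lenD_ge1 digD
    (INR q) (pos_INR q) digD_bound offsetD a0); auto; lra.
Qed.

Lemma Dh_nowhere_dense : nowhere_dense (Dh q u).
Proof.
  destruct dim_fun_a0. rewrite Dh_attractor.
  apply (attractor_nowhere_dense q q_ge2 Theta Theta_neq_nil lenD lenD_ge1 digD
    (INR q) (pos_INR q) digD_bound offsetD a0); auto; lra.
Qed.

Lemma Dh_dim_lt_Eh_dim : a0 < dimE.
Proof. apply dim_eq_root_lt_dimE, dim_fun_a0. Qed.

End RootOfDimEq.

Lemma Dh_self_similar : self_similar (Dh q u).
Proof.
  rewrite Dh_attractor.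
  exact (attractor_self_similar q q_ge2 Theta Theta_neq_nil lenD lenD_ge1 digD
    (INR q) (pos_INR q) digD_bound offsetD).
Qed.

Lemma Eh_self_similar : self_similar (Eh q u).
Proof.
  rewrite Eh_attractor.
  exact (attractor_self_similar q q_ge2 Theta Theta_neq_nil lenE lenE_ge1 digE
    (INR q) (pos_INR q) digE_bound 0).
Qed.

Lemma Eh_hausdorff_dim : hausdorff_dim (Eh q u) dimE.
Proof.
  pose proof dimE_bounds. rewrite Eh_attractor.
  apply (attractor_dim q q_ge2 Theta NoDup_Theta Theta_neq_nil lenE lenE_ge1 1 lenE_le1 digE digE_incongruent
    (INR q) (pos_INR q) digE_bound 0 dimE lenE_weight). lra.
Qed.

End Theta.

Theorem theorem3p1 (q u : nat) (hq : (3 < q)%nat) (hu : (u < q)%nat) :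
  (* (a) *)
  (uncountable (Dh q u) /\ perfect (Dh q u) /\ nowhere_dense (Dh q u) /\
   leb_null (Dh q u) /\ self_similar (Dh q u) /\
   (exists a0, dim_eq q u a0) /\
   (forall a0, dim_eq q u a0 -> hausdorff_dim (Dh q u) a0)) /\
  (* (b) *)
  (self_similar (Eh q u) /\
   hausdorff_dim (Eh q u) (ln (INR (card_Theta q u)) / ln (INR q))) /\
  (* (c) *)
  (forall d1 d2, hausdorff_dim (Dh q u) d1 -> hausdorff_dim (Eh q u) d2 -> d1 <> d2).
Proof.
  destruct (dim_eq_solvable q u hq hu) as [a0 Ha0].
  split; [|split].
  - refine (conj _ (conj _ (conj _ (conj _ (conj _ (conj _ _)))))).
    + exact (Dh_uncountable q u hq hu a0 Ha0).
    + exact (Dh_perfect q u hq hu a0 Ha0).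
    + exact (Dh_nowhere_dense q u hq hu a0 Ha0).
    + exact (Dh_leb_null q u hq hu a0 Ha0).
    + exact (Dh_self_similar q u hq hu).
    + exists a0. exact Ha0.
    + exact (Dh_hausdorff_dim q u hq hu).
  - split; [exact (Eh_self_similar q u hq hu)|].
    exact (Eh_hausdorff_dim q u hq hu).
  - intros d1 d2 H1 H2.
    rewrite (hausdorff_dim_unique _ d1 a0 H1 (Dh_hausdorff_dim q u hq hu a0 Ha0)).
    rewrite (hausdorff_dim_unique _ d2 (dimE q u) H2 (Eh_hausdorff_dim q u hq hu)).
    apply Rlt_not_eq, (Dh_dim_lt_Eh_dim q u hq hu a0 Ha0).
Qed.
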